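(* Let $\vartheta_0\in(0,1/8]$ and $T>0$. Assume $\omega:[0,T]\times\mathbb{T}\times[0,1]\to\mathbb{R}$ is a sufficiently smooth solution of $$\partial_t\omega+y\partial_x\omega+u\cdot\nabla\omega=0,\quad u=(u^x,u^y)=(-\partial_y\psi,\partial_x\psi),\quad \Delta\psi=\omega,\quad \psi(x,0)=\psi(x,1)=0,$$ with $\int_{\mathbb{T}\times[0,1]}\omega(t,x,y)\,dx\,dy=0$, such that $\omega(t)$ is supported in $\mathbb{T}\times[\vartheta_0,1-\vartheta_0]$ and $\|\langle\omega\rangle(t)\|_{H^{10}}$ is sufficiently small (so that the map $y\mapsto v(t,y)$ below is a smooth bijective change of coordinates) for all $t\in[0,T]$. Then there is $c_0\in\mathbb{R}$ such that $$\langle u^x\rangle(t,y)=c_0\quad\text{for all }t\in[0,T],\ y\in[0,\vartheta_0]\cup[1-\vartheta_0,1].$$ Define the change of coordinates $(z,v):\mathbb{T}\times[0,1]\to\mathbb{T}\times[c_0,c_0+1]$, $$v:=y+\frac1t\int_0^t\langle u^x\rangle(\tau,y)\,d\tau,\qquad z:=x-tv,$$ and new functions $f,\phi$ on $[0,T]\times\mathbb{T}\times[c_0,c_0+1]$ and $V',V'',\dot V,\mathcal{H}$ on $[0,T]\times[c_0,c_0+1]$ by $$f(t,z,v):=\omega(t,x,y),\quad \phi(t,z,v):=\psi(t,x,y),$$ $$V'(t,v):=\partial_yv(t,y),\quad V''(t,v):=\partial_{yy}v(t,y),\quad \dot V(t,v):=\partial_tv(t,y),\quad \mathcal{H}(t,v):=tV'(t,v)\partial_v\dot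 V(t,v).$$ Then $\mathcal{H}=1-V'-\langle f\rangle$; the functions $f$, $V'-1$ and $\mathcal{H}$ are supported in $v\in[c_0+\vartheta_0,c_0+1-\vartheta_0]$; and they satisfy the evolution equations $$\partial_tf=V'\partial_vP_{\neq0}\phi\,\partial_zf-(\dot V+V'\partial_z\phi)\,\partial_vf,$$ $$\partial_t(V'-1)=\mathcal{H}/t-\dot V\partial_v(V'-1),$$ $$\partial_t\mathcal{H}=-\mathcal{H}/t-\dot V\partial_v\mathcal{H}-V'\langle\partial_vP_{\neq0}\phi\,\partial_zf\rangle+V'\langle\partial_z\phi\,\partial_vf\rangle.$$ Moreover $\phi$, $V''$, $\dot V$ satisfy $$\partial_z^2\phi+(V')^2(\partial_v-t\partial_z)^2\phi+V''(\partial_v-t\partial_z)\phi=f,$$ $$\partial_v\dot V=\mathcal{H}/(tV'),\qquad \dot V(t,c_0)=\dot V(t,1+c_0)=0,\qquad V''=V'\partial_vV'.$$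
   Context: $\mathbb{T}=\mathbb{R}/(2\pi\mathbb{Z})$. For a function $H$ of $(x,y)$ (resp. of $(z,v)$), $\langle H\rangle$ denotes its average over the periodic variable $x$ (resp. $z$), and $P_{\neq0}H:=H-\langle H\rangle$. The functions $V',V'',\dot V$ are the functions $\partial_yv,\partial_{yy}v,\partial_tv$ expressed in the variables $(t,v)$. *)

From Stdlib Require Import Reals List.
From Coquelicot Require Import Coquelicot.
Open Scope R_scope.

Definition d_t (F : R -> R -> R -> R) (t a b : R) : R := Derive (fun s => F s a b) t.
Definition d_1 (F : R -> R -> R -> R) (t a b : R) : R := Derive (fun s => F t s b) a.
Definition d_2 (F : R -> R -> R -> R) (t a b : R) : R := Derive (fun s => F t a s) b.

Definition dt2 (G : R -> R -> R) (t w : R) : R := Derive (fun s => G s w) t.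
Definition dw2 (G : R -> R -> R) (t w : R) : R := Derive (fun s => G t s) w.

Inductive dop := Dt | D1 | D2.
Definition apply_d (d : dop) (F : R -> R -> R -> R) : R -> R -> R -> R :=
  match d with Dt => d_t F | D1 => d_1 F | D2 => d_2 F end.
Definition apply_ds (l : list dop) (F : R -> R -> R -> R) : R -> R -> R -> R :=
  fold_right apply_d F l.
Definition smooth3 (F : R -> R -> R -> R) : Prop :=
  forall l : list dop, forall t a b : R,
    let G := apply_ds l F in
    ex_derive (fun s => G s a b) t /\ ex_derive (fun s => G t s b) a /\
    ex_derive (fun s => G t a s) b /\
    continuous (fun p : R * R * R => G (fst (fst p)) (snd (fst p)) (snd p)) (t, a, b).

Definition avg (h : R -> R) : R := / (2 * PI) * RInt h 0 (2 * PI).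
Definition avgz (F : R -> R -> R -> R) (t w : R) : R := avg (fun z => F t z w).
Definition Pne0 (F : R -> R -> R -> R) (t z w : R) : R := F t z w - avgz F t w.

Definition H10norm (g : R -> R) : R :=
  sqrt (sum_f_R0 (fun k => RInt (fun y => (Derive_n g k y) ^ 2) 0 1) 10).

Definition ux (psi : R -> R -> R -> R) (t x y : R) : R := - d_2 psi t x y.

Definition vmap (psi : R -> R -> R -> R) (t y : R) : R :=
  y + / t * RInt (fun tau => avgz (ux psi) tau y) 0 t.

(* Averaging in x, the Poisson equation gives d_y <u^x> = - <omega>, so <u^x> is
   constant in y on the two strips where omega vanishes; the two constants agree because <omega> has
   zero mean.  Their common value is <u^x>(t, 0) = int_0^1 (1 - y) <omega>(t, y) dy, which does not
   depend on t: by the averaged transport equation d_t <omega> = - d_y <d_x psi omega>, and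
   <d_x psi omega> = d_y <d_x psi d_y psi> vanishes at the walls together with its primitive.
   The H^10 smallness yields |<omega>| <= 1/2, hence d_y v = 1 - (1/t) int_0^t <omega> >= 1/2, so
   v(t, .) is an increasing bijection onto [c0, c0 + 1] whose inverse is differentiable in (t, v).
   The remaining identities are the chain rule through x = z + t v, y = v^-1(t, v), combined with
   the transport and Poisson equations. *)

From Stdlib Require Import Reals Lra Psatz List ClassicalEpsilon.
From Coquelicot Require Import Coquelicot.
Open Scope R_scope.

Lemma continuous_Rplus (f g : R -> R) x :
  continuous f x -> continuous g x -> continuous (fun y => f y + g y) x.
Proof. exact (continuous_plus (V := R_NormedModule) f g x). Qed.

Lemma continuous_Rminus (f g : R -> R) x :
  continuous f x -> continuous g x -> continuous (fun y => f y - g y) x.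
Proof. exact (continuous_minus (V := R_NormedModule) f g x). Qed.

Lemma continuous_Rmult (f g : R -> R) x :
  continuous f x -> continuous g x -> continuous (fun y => f y * g y) x.
Proof. exact (continuous_mult (K := R_AbsRing) f g x). Qed.

Lemma continuous_Ropp (f : R -> R) x : continuous f x -> continuous (fun y => - f y) x.
Proof. exact (continuous_opp (V := R_NormedModule) f x). Qed.

Lemma continuous_Rconst (c x : R) : continuous (fun _ : R => c) x.
Proof. exact (continuous_const (U := R_UniformSpace) (V := R_UniformSpace) c x). Qed.

Lemma continuous_Rid (x : R) : continuous (fun y : R => y) x.
Proof. exact (continuous_id (U := R_UniformSpace) x). Qed.

Lemma is_derive_Rplus (f g : R -> R) x df dg :
  is_derive f x df -> is_derive g x dg -> is_derive (fun y => f y + g y) x (df + dg).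
Proof. exact (is_derive_plus (K := R_AbsRing) (V := R_NormedModule) f g x df dg). Qed.

Lemma is_derive_Rminus (f g : R -> R) x df dg :
  is_derive f x df -> is_derive g x dg -> is_derive (fun y => f y - g y) x (df - dg).
Proof. exact (is_derive_minus (K := R_AbsRing) (V := R_NormedModule) f g x df dg). Qed.

Lemma is_derive_Ropp (f : R -> R) x df :
  is_derive f x df -> is_derive (fun y => - f y) x (- df).
Proof. exact (is_derive_opp (K := R_AbsRing) (V := R_NormedModule) f x df). Qed.

Lemma is_derive_Rmult (f g : R -> R) x df dg :
  is_derive f x df -> is_derive g x dg ->
  is_derive (fun y => f y * g y) x (df * g x + f x * dg).
Proof. intros Hf Hg. exact (is_derive_mult (K := R_AbsRing) f g x df dg Hf Hg Rmult_comm). Qed.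

Lemma is_derive_Rconst (c x : R) : is_derive (fun _ => c) x 0.
Proof. exact (is_derive_const (K := R_AbsRing) (V := R_NormedModule) c x). Qed.

Lemma is_derive_Rid (x : R) : is_derive (fun y : R => y) x 1.
Proof. exact (is_derive_id (K := R_AbsRing) x). Qed.

Lemma is_derive_Rcomp (f g : R -> R) x df dg :
  is_derive f (g x) df -> is_derive g x dg -> is_derive (fun y => f (g y)) x (df * dg).
Proof.
  intros Hf Hg. pose proof (is_derive_comp f g x df dg Hf Hg) as H.
  unfold scal in H; simpl in H; unfold mult in H; simpl in H. now rewrite Rmult_comm.
Qed.

Lemma is_derive_Rinv_id (t : R) : t <> 0 -> is_derive (fun s : R => / s) t (- / (t * t)).
Proof.
  intros Ht. pose proof (is_derive_inv _ _ _ (is_derive_Rid t) Ht) as H.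
  replace (- / (t * t)) with (- 1 / t ^ 2) by (field; exact Ht). exact H.
Qed.

Lemma is_derive_continuous_R (f : R -> R) (x l : R) : is_derive f x l -> continuous f x.
Proof.
  intros H. exact (ex_derive_continuous (K := R_AbsRing) (V := R_NormedModule) f x (ex_intro _ l H)).
Qed.

Lemma is_derive_replace (f : R -> R) (x l l' : R) : is_derive f x l -> l = l' -> is_derive f x l'.
Proof. now intros H <-. Qed.

Lemma is_derive_affine (a b x : R) : is_derive (fun s => a + b * s) x b.
Proof.
  apply (is_derive_replace _ _ (0 + b * 1)); [|ring].
  apply is_derive_Rplus; [apply is_derive_Rconst|apply is_derive_scal, is_derive_Rid].
Qed.

Lemma is_derive_ext_ball (f g : R -> R) (x l d : R) : 0 < d ->
  (forall y, Rabs (y - x) < d -> f y = g y) -> is_derive f x l -> is_derive g x l.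
Proof.
  intros Hd E H. apply (is_derive_ext_loc f g x l); auto.
  exists (mkposreal d Hd). exact E.
Qed.

Lemma ex_RInt_continuous_R (g : R -> R) a b : (forall x, continuous g x) -> ex_RInt g a b.
Proof. intros H. apply (ex_RInt_continuous (V := R_CompleteNormedModule)). intros; apply H. Qed.

Lemma RInt_Rplus (g h : R -> R) a b : ex_RInt g a b -> ex_RInt h a b ->
  RInt (fun x => g x + h x) a b = RInt g a b + RInt h a b.
Proof. exact (RInt_plus (V := R_CompleteNormedModule) g h a b). Qed.

Lemma RInt_Rminus (g h : R -> R) a b : ex_RInt g a b -> ex_RInt h a b ->
  RInt (fun x => g x - h x) a b = RInt g a b - RInt h a b.
Proof. exact (RInt_minus (V := R_CompleteNormedModule) g h a b). Qed.

Lemma RInt_Rscal (g : R -> R) c a b : ex_RInt g a b ->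
  RInt (fun x => c * g x) a b = c * RInt g a b.
Proof. exact (RInt_scal (V := R_CompleteNormedModule) g a b c). Qed.

Lemma RInt_Rconst (c a b : R) : RInt (fun _ => c) a b = (b - a) * c.
Proof. exact (RInt_const (V := R_CompleteNormedModule) a b c). Qed.

Lemma RInt_ext_R (g h : R -> R) a b :
  (forall x, Rmin a b < x < Rmax a b -> g x = h x) -> RInt g a b = RInt h a b.
Proof. exact (RInt_ext (V := R_CompleteNormedModule) g h a b). Qed.

Lemma RInt_Chasles_R (g : R -> R) a b c : ex_RInt g a b -> ex_RInt g b c ->
  RInt g a b + RInt g b c = RInt g a c.
Proof. exact (RInt_Chasles (V := R_CompleteNormedModule) g a b c). Qed.

Lemma RInt_is_derive (f df : R -> R) a b :
  (forall x, Rmin a b <= x <= Rmax a b -> is_derive f x (df x)) ->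
  (forall x, Rmin a b <= x <= Rmax a b -> continuous df x) ->
  RInt df a b = f b - f a.
Proof.
  intros Hd Hc. apply (is_RInt_unique (V := R_CompleteNormedModule)).
  exact (is_RInt_derive (V := R_CompleteNormedModule) f df a b Hd Hc).
Qed.

Lemma is_derive_RInt_R (g : R -> R) a t :
  (forall x, continuous g x) -> is_derive (fun s => RInt g a s) t (g t).
Proof.
  intros Hc. apply (is_derive_RInt (V := R_NormedModule) g _ a t); [|apply Hc].
  exists (mkposreal 1 Rlt_0_1). intros. apply (RInt_correct (V := R_CompleteNormedModule)).
  apply ex_RInt_continuous_R, Hc.
Qed.

Lemma Rabs_RInt_le_const (f : R -> R) a b M : ex_RInt f a b ->
  (forall x, Rmin a b <= x <= Rmax a b -> Rabs (f x) <= M) ->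
  Rabs (RInt f a b) <= Rabs (b - a) * M.
Proof.
  intros Ex H. destruct (Rle_dec a b) as [Hab|Hab].
  - rewrite (Rabs_right (b - a)) by lra. apply abs_RInt_le_const; auto.
    intros; apply H. rewrite Rmin_left, Rmax_right; lra.
  - assert (Ex' : ex_RInt f b a) by now apply (ex_RInt_swap (V := R_NormedModule)).
    rewrite <- (opp_RInt_swap (V := R_CompleteNormedModule)) by exact Ex'.
    unfold opp; simpl. rewrite Rabs_Ropp, (Rabs_left (b - a)) by lra.
    replace (- (b - a)) with (a - b) by ring. apply abs_RInt_le_const; auto; [lra|].
    intros; apply H. rewrite Rmin_right, Rmax_left; lra.
Qed.

Lemma Rabs_sub_le_of_between u u' x :
  Rmin u u' <= x <= Rmax u u' -> Rabs (x - u) <= Rabs (u' - u).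
Proof.
  unfold Rmin, Rmax. destruct (Rle_dec u u'); unfold Rabs; repeat destruct Rcase_abs; lra.
Qed.

Lemma mvt_between (g dg : R -> R) u u' :
  (forall x, Rabs (x - u) <= Rabs (u' - u) -> is_derive g x (dg x)) ->
  exists xi, Rabs (xi - u) <= Rabs (u' - u) /\ Rmin u u' <= xi <= Rmax u u' /\
    g u' - g u = dg xi * (u' - u).
Proof.
  intros H. destruct (MVT_gen g u u' dg) as [xi [H1 H2]].
  - intros x Hx. apply H, Rabs_sub_le_of_between. lra.
  - intros x Hx. apply continuity_pt_filterlim.
    exact (is_derive_continuous_R g x _ (H x (Rabs_sub_le_of_between u u' x Hx))).
  - exists xi. split; [apply Rabs_sub_le_of_between; lra|]. split; [lra|exact H2].
Qed.

Ltac Rmin_facts :=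
  repeat match goal with
  | |- context [Rmin ?a ?b] =>
      lazymatch goal with
      | _ : Rmin a b <= a |- _ => fail
      | _ => pose proof (Rmin_l a b); pose proof (Rmin_r a b)
      end
  end.

Lemma ball_in_open_interval a b x : a < x < b ->
  exists d, 0 < d /\ forall s, Rabs (s - x) < d -> a < s < b.
Proof.
  intros Hx. exists (Rmin (x - a) (b - x)). split; [apply Rmin_pos; lra|].
  intros s Hs. pose proof (Rmin_l (x - a) (b - x)). pose proof (Rmin_r (x - a) (b - x)).
  apply Rabs_def2 in Hs. lra.
Qed.

Lemma eq_of_is_derive_0 (f : R -> R) a b : a <= b ->
  (forall x, a < x < b -> is_derive f x 0) -> (forall x, a <= x <= b -> continuous f x) ->
  f b = f a.
Proof.
  intros Hab Hd Hc. destruct (MVT_gen f a b (fun _ => 0)) as [c [_ Hc2]].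
  - rewrite Rmin_left, Rmax_right by lra. auto.
  - rewrite Rmin_left, Rmax_right by lra. intros. apply continuity_pt_filterlim, Hc; auto.
  - lra.
Qed.

Lemma is_derive_linear_approx f x l : is_derive f x l ->
  forall eps, 0 < eps -> exists del, 0 < del /\ forall y, Rabs (y - x) < del ->
    Rabs (f y - f x - l * (y - x)) <= eps * Rabs (y - x).
Proof.
  intros H e He. apply is_derive_Reals in H. destruct (H e He) as [[d Hd] H'].
  exists d; split; [assumption|]. intros y Hy.
  destruct (Req_dec y x) as [->|Hne].
  - rewrite !Rminus_diag, Rmult_0_r, Rminus_0_r, Rabs_R0, Rmult_0_r; lra.
  - specialize (H' (y - x) ltac:(lra) Hy). replace (x + (y - x)) with y in H' by ring.
    assert (Hh : Rabs (y - x) > 0) by (apply Rabs_pos_lt; lra).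
    replace (f y - f x - l * (y - x)) with (((f y - f x) / (y - x) - l) * (y - x)) by (field; lra).
    rewrite Rabs_mult. apply Rmult_le_compat_r; lra.
Qed.

Lemma linear_approx_is_derive f x l :
  (forall eps, 0 < eps -> exists del, 0 < del /\ forall y, Rabs (y - x) < del ->
    Rabs (f y - f x - l * (y - x)) <= eps * Rabs (y - x)) -> is_derive f x l.
Proof.
  intros H. apply is_derive_Reals. intros e He.
  destruct (H (e / 2) ltac:(lra)) as [d [Hd H']]. exists (mkposreal d Hd).
  intros h Hh Hhd. specialize (H' (x + h)). replace (x + h - x) with h in H' by ring.
  specialize (H' Hhd). simpl in *.
  assert (Hh' : Rabs h > 0) by (apply Rabs_pos_lt; lra).
  replace ((f (x + h) - f x) / h - l) with ((f (x + h) - f x - l * h) / h) by (field; lra).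
  rewrite Rabs_div by lra. apply (Rmult_lt_reg_r (Rabs h)); auto.
  unfold Rdiv. rewrite Rmult_assoc, Rinv_l by lra. nra.
Qed.

Definition continuity_3d_pt (F : R -> R -> R -> R) (a b c : R) : Prop :=
  forall eps : posreal, exists delta : posreal, forall a' b' c',
    Rabs (a' - a) < delta -> Rabs (b' - b) < delta -> Rabs (c' - c) < delta ->
    Rabs (F a' b' c' - F a b c) < eps.

Definition continuous3 (F : R -> R -> R -> R) : Prop :=
  forall a b c, continuity_3d_pt F a b c.

Lemma continuity_3d_pt_continuous F a b c :
  continuity_3d_pt F a b c <->
  continuous (fun p : R * R * R => F (fst (fst p)) (snd (fst p)) (snd p)) (a, b, c).
Proof.
  split; intros H.
  - apply filterlim_locally. intros eps. destruct (H eps) as [d Hd]. exists d.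
    intros [[a' b'] c'] [[H1 H2] H3]. apply Hd; auto.
  - intros eps. apply filterlim_locally with (eps := eps) in H. destruct H as [d H].
    exists d. intros a' b' c' H1 H2 H3. apply (H (a', b', c')). repeat split; assumption.
Qed.

Lemma continuity_3d_pt_2d_12 F a b c :
  continuity_3d_pt F a b c -> continuity_2d_pt (fun a b => F a b c) a b.
Proof.
  intros H eps. destruct (H eps) as [d Hd]. exists d. intros u v Hu Hv.
  apply Hd; auto. rewrite Rminus_diag, Rabs_R0. apply cond_pos.
Qed.

Lemma continuity_3d_pt_2d_23 F a b c :
  continuity_3d_pt F a b c -> continuity_2d_pt (fun b c => F a b c) b c.
Proof.
  intros H eps. destruct (H eps) as [d Hd]. exists d. intros u v Hu Hv.
  apply Hd; auto. rewrite Rminus_diag, Rabs_R0. apply cond_pos.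
Qed.

Lemma continuity_3d_pt_swap12 F a b c :
  continuity_3d_pt F a b c -> continuity_3d_pt (fun b a c => F a b c) b a c.
Proof. intros H eps. destruct (H eps) as [d Hd]. exists d. auto. Qed.

Lemma continuity_3d_pt_of_2d_12 G a b c :
  continuity_2d_pt G a b -> continuity_3d_pt (fun a b _ => G a b) a b c.
Proof. intros H eps. destruct (H eps) as [d Hd]. exists d. auto. Qed.

Lemma continuity_3d_pt_of_2d_13 G a b c :
  continuity_2d_pt G a c -> continuity_3d_pt (fun a _ c => G a c) a b c.
Proof. intros H eps. destruct (H eps) as [d Hd]. exists d. auto. Qed.

Lemma continuity_2d_pt_swap G a b :
  continuity_2d_pt G a b -> continuity_2d_pt (fun b a => G a b) b a.
Proof. intros H eps. destruct (H eps) as [d Hd]. exists d. auto. Qed.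

Lemma continuity_2d_pt_fix_1 G a b c :
  continuity_2d_pt G a b -> continuity_2d_pt (fun _ y => G a y) c b.
Proof.
  intros H eps. destruct (H eps) as [d Hd]. exists d. intros u v _ Hv.
  apply Hd; [rewrite Rminus_diag, Rabs_R0; apply cond_pos|exact Hv].
Qed.

Lemma continuity_2d_pt_Rinv_1 t y : t <> 0 -> continuity_2d_pt (fun t _ => / t) t y.
Proof.
  intros Ht. apply (continuity_2d_pt_inv (fun t _ => t)); [apply continuity_2d_pt_id1|exact Ht].
Qed.

Lemma continuity_2d_pt_continuous_1 G a b :
  continuity_2d_pt G a b -> continuous (fun s => G s b) a.
Proof.
  intros H. apply continuity_pt_filterlim. intros e He.
  destruct (H (mkposreal e He)) as [d Hd]. exists d; split; [apply cond_pos|].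
  intros x [_ Hx]. apply Hd; [exact Hx|]. rewrite Rminus_diag, Rabs_R0. apply cond_pos.
Qed.

Lemma continuity_2d_pt_continuous_2 G a b :
  continuity_2d_pt G a b -> continuous (fun s => G a s) b.
Proof. intros H. exact (continuity_2d_pt_continuous_1 _ b a (continuity_2d_pt_swap G a b H)). Qed.

Lemma continuity_3d_pt_continuous_1 F a b c :
  continuity_3d_pt F a b c -> continuous (fun s => F s b c) a.
Proof.
  intros H. exact (continuity_2d_pt_continuous_1 (fun a b => F a b c) a b
    (continuity_3d_pt_2d_12 F a b c H)).
Qed.

Lemma continuity_3d_pt_continuous_2 F a b c :
  continuity_3d_pt F a b c -> continuous (fun s => F a s c) b.
Proof.
  intros H. exact (continuity_2d_pt_continuous_1 (fun b c => F a b c) b c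
    (continuity_3d_pt_2d_23 F a b c H)).
Qed.

Section Continuous3_algebra.
Variables F G : R -> R -> R -> R.
Hypotheses (HF : continuous3 F) (HG : continuous3 G).

Lemma continuous3_plus : continuous3 (fun t x y => F t x y + G t x y).
Proof.
  intros t x y. apply continuity_3d_pt_continuous.
  apply (continuous_plus (V := R_NormedModule)); apply continuity_3d_pt_continuous; auto.
Qed.

Lemma continuous3_minus : continuous3 (fun t x y => F t x y - G t x y).
Proof.
  intros t x y. apply continuity_3d_pt_continuous.
  apply (continuous_minus (V := R_NormedModule)); apply continuity_3d_pt_continuous; auto.
Qed.

Lemma continuous3_mult : continuous3 (fun t x y => F t x y * G t x y).
Proof.
  intros t x y. apply continuity_3d_pt_continuous.
  apply (continuous_mult (K := R_AbsRing)); apply continuity_3d_pt_continuous; auto.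
Qed.
End Continuous3_algebra.

Lemma continuous3_const c : continuous3 (fun _ _ _ => c).
Proof.
  intros t x y eps. exists eps. intros. rewrite Rminus_diag, Rabs_R0. apply cond_pos.
Qed.

Lemma continuous3_proj3 : continuous3 (fun _ _ y => y).
Proof. intros t x y eps. exists eps. auto. Qed.

Lemma smooth3_apply_d d F : smooth3 F -> smooth3 (apply_d d F).
Proof.
  intros H l. specialize (H (l ++ d :: nil)). unfold apply_ds in *.
  rewrite fold_right_app in H. exact H.
Qed.

Lemma smooth3_d_t F : smooth3 F -> smooth3 (d_t F).
Proof. exact (smooth3_apply_d Dt F). Qed.

Lemma smooth3_d_1 F : smooth3 F -> smooth3 (d_1 F).
Proof. exact (smooth3_apply_d D1 F). Qed.

Lemma smooth3_d_2 F : smooth3 F -> smooth3 (d_2 F).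
Proof. exact (smooth3_apply_d D2 F). Qed.

Lemma smooth3_iter_d_2 F k : smooth3 F -> smooth3 (Nat.iter k d_2 F).
Proof. intros H. induction k; simpl; auto using smooth3_d_2. Qed.

Lemma smooth3_continuous3 F : smooth3 F -> continuous3 F.
Proof. intros H t a b. apply continuity_3d_pt_continuous, (H nil). Qed.

Lemma smooth3_is_derive_t F t x y : smooth3 F -> is_derive (fun s => F s x y) t (d_t F t x y).
Proof. intros H. apply Derive_correct. exact (proj1 (H nil t x y)). Qed.

Lemma smooth3_is_derive_1 F t x y : smooth3 F -> is_derive (fun s => F t s y) x (d_1 F t x y).
Proof. intros H. apply Derive_correct. exact (proj1 (proj2 (H nil t x y))). Qed.

Lemma smooth3_is_derive_2 F t x y : smooth3 F -> is_derive (fun s => F t x s) y (d_2 F t x y).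
Proof. intros H. apply Derive_correct. exact (proj1 (proj2 (proj2 (H nil t x y)))). Qed.

Lemma smooth3_continuous_1 F t x y : smooth3 F -> continuous (fun s => F t s y) x.
Proof. intros H. apply continuity_3d_pt_continuous_2, smooth3_continuous3, H. Qed.

Lemma smooth3_is_derive_1_shift F t c y z : smooth3 F ->
  is_derive (fun a => F t (a + c) y) z (d_1 F t (z + c) y).
Proof.
  intros H. apply (is_derive_replace _ _ (d_1 F t (z + c) y * (1 + 0))); [|ring].
  apply (is_derive_Rcomp (fun x => F t x y) (fun a => a + c)); [now apply smooth3_is_derive_1|].
  apply is_derive_Rplus; [apply is_derive_Rid|apply is_derive_Rconst].
Qed.

#[global] Hint Resolve smooth3_d_t smooth3_d_1 smooth3_d_2 smooth3_continuous3
  smooth3_continuous_1 : smooth.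

Ltac solve_continuous3 :=
  repeat (cbv beta; match goal with
  | |- continuous3 (fun t x y => _ + _) => apply continuous3_plus
  | |- continuous3 (fun t x y => _ - _) => apply continuous3_minus
  | |- continuous3 (fun t x y => _ * _) => apply continuous3_mult
  | |- continuous3 (fun t x y => y) => apply continuous3_proj3
  | |- continuous3 (fun t x y => _) => apply continuous3_const
  | |- continuous3 ?F => apply (smooth3_continuous3 F); solve [auto with smooth]
  end).

Ltac solve_continuous :=
  repeat (cbv beta; match goal with
  | |- forall _, _ => intro
  | |- continuous (fun s => _ + _) _ => apply continuous_Rplus
  | |- continuous (fun s => _ - _) _ => apply continuous_Rminus
  | |- continuous (fun s => _ * _) _ => apply continuous_Rmult
  | |- continuous (fun s => - _) _ => apply continuous_Ropp
  | |- continuous (fun s => s) _ => apply continuous_Rid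
  | |- continuous (fun s => _) _ => apply continuous_Rconst
  | |- continuous (fun s => ?F ?t s ?y) _ => apply (smooth3_continuous_1 F t); solve [auto with smooth]
  | |- continuous (Rminus ?c) _ => apply (continuous_Rminus (fun _ => c) (fun s => s))
  | |- continuous (Rplus ?c) _ => apply (continuous_Rplus (fun _ => c) (fun s => s))
  | |- continuous (Rmult ?c) _ => apply (continuous_Rmult (fun _ => c) (fun s => s))
  | |- continuous _ _ => solve [auto]
  end).

Definition has_C1_partials3 (F Ft F1 F2 : R -> R -> R -> R) (a b c : R) : Prop :=
  (exists delta : posreal, forall a' b' c',
     Rabs (a' - a) < delta -> Rabs (b' - b) < delta -> Rabs (c' - c) < delta ->
     is_derive (fun s => F s b' c') a' (Ft a' b' c') /\
     is_derive (fun s => F a' s c') b' (F1 a' b' c') /\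
     is_derive (fun s => F a' b' s) c' (F2 a' b' c')) /\
  continuity_3d_pt Ft a b c /\ continuity_3d_pt F1 a b c /\ continuity_3d_pt F2 a b c.

Definition has_C1_partials (G Gt Gw : R -> R -> R) (a b : R) : Prop :=
  (exists delta : posreal, forall a' b', Rabs (a' - a) < delta -> Rabs (b' - b) < delta ->
     is_derive (fun s => G s b') a' (Gt a' b') /\ is_derive (fun s => G a' s) b' (Gw a' b')) /\
  continuity_2d_pt Gt a b /\ continuity_2d_pt Gw a b.

Lemma smooth3_has_C1_partials3 F t a b : smooth3 F -> has_C1_partials3 F (d_t F) (d_1 F) (d_2 F) t a b.
Proof.
  intros H. split; [|repeat split; apply smooth3_continuous3; auto with smooth].
  exists (mkposreal 1 Rlt_0_1). intros. split; [|split];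
    [apply smooth3_is_derive_t|apply smooth3_is_derive_1|apply smooth3_is_derive_2]; exact H.
Qed.

Lemma has_C1_partials3_of_2d G Gt Gw a b c : has_C1_partials G Gt Gw a c ->
  has_C1_partials3 (fun s _ y => G s y) (fun s _ y => Gt s y) (fun _ _ _ => 0) (fun s _ y => Gw s y)
    a b c.
Proof.
  intros [[d Hd] [Ht Hw]]. split; [|repeat split].
  - exists d. intros a' b' c' H1 H2 H3. destruct (Hd a' c' H1 H3).
    split; [|split]; auto. apply is_derive_Rconst.
  - now apply continuity_3d_pt_of_2d_13.
  - apply continuous3_const.
  - now apply continuity_3d_pt_of_2d_13.
Qed.

(* Moving one coordinate at a time, the mean value theorem turns each increment into a
   partial derivative at a nearby point. *)
Lemma has_C1_partials3_linear_approx F Ft F1 F2 a b c : has_C1_partials3 F Ft F1 F2 a b c ->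
  forall eps : posreal, exists delta : posreal, forall a' b' c',
   Rabs (a' - a) < delta -> Rabs (b' - b) < delta -> Rabs (c' - c) < delta ->
   Rabs (F a' b' c' - F a b c - (Ft a b c * (a' - a) + F1 a b c * (b' - b) + F2 a b c * (c' - c)))
     <= eps * (Rabs (a' - a) + Rabs (b' - b) + Rabs (c' - c)).
Proof.
  intros [[d0 Hex] [Ct [C1 C2]]] e.
  destruct (Ct e) as [d1 H1]. destruct (C1 e) as [d2 H2]. destruct (C2 e) as [d3 H3].
  set (d := Rmin (Rmin d0 d1) (Rmin d2 d3)).
  assert (Hd : 0 < d) by (unfold d; repeat apply Rmin_pos; apply cond_pos).
  assert (Hdd : d <= d0 /\ d <= d1 /\ d <= d2 /\ d <= d3) by (unfold d; Rmin_facts; lra).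
  exists (mkposreal d Hd). simpl. intros a' b' c' Ha Hb Hc.
  assert (Z : Rabs (a - a) = 0 /\ Rabs (b - b) = 0) by (rewrite !Rminus_diag, Rabs_R0; lra).
  destruct (mvt_between (fun s => F s b' c') (fun s => Ft s b' c') a a') as [xi [Hxi [_ E1]]].
  { intros x Hx. apply (Hex x b' c'); lra. }
  destruct (mvt_between (fun s => F a s c') (fun s => F1 a s c') b b') as [eta [Heta [_ E2]]].
  { intros x Hx. apply (Hex a x c'); lra. }
  destruct (mvt_between (fun s => F a b s) (fun s => F2 a b s) c c') as [zeta [Hzeta [_ E3]]].
  { intros x Hx. apply (Hex a b x); lra. }
  assert (K1 : Rabs (Ft xi b' c' - Ft a b c) < e) by (apply H1; lra).
  assert (K2 : Rabs (F1 a eta c' - F1 a b c) < e) by (apply H2; lra).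
  assert (K3 : Rabs (F2 a b zeta - F2 a b c) < e) by (apply H3; lra).
  replace (F a' b' c' - F a b c - (Ft a b c * (a' - a) + F1 a b c * (b' - b) + F2 a b c * (c' - c)))
  with ((Ft xi b' c' - Ft a b c) * (a' - a) + (F1 a eta c' - F1 a b c) * (b' - b)
      + (F2 a b zeta - F2 a b c) * (c' - c)) by lra.
  eapply Rle_trans; [apply Rabs_triang|].
  eapply Rle_trans; [apply Rplus_le_compat_r; apply Rabs_triang|].
  rewrite !Rabs_mult.
  pose proof (Rabs_pos (a' - a)). pose proof (Rabs_pos (b' - b)). pose proof (Rabs_pos (c' - c)).
  nra.
Qed.

Lemma has_C1_partials_linear_approx G Gt Gw a b : has_C1_partials G Gt Gw a b ->
  forall eps : posreal, exists delta : posreal, forall a' b',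
   Rabs (a' - a) < delta -> Rabs (b' - b) < delta ->
   Rabs (G a' b' - G a b - (Gt a b * (a' - a) + Gw a b * (b' - b)))
     <= eps * (Rabs (a' - a) + Rabs (b' - b)).
Proof.
  intros HG eps.
  destruct (has_C1_partials3_linear_approx _ _ _ _ a 0 b (has_C1_partials3_of_2d _ _ _ a 0 b HG) eps)
    as [d Hd].
  exists d. intros a' b' Ha Hb.
  assert (Z : Rabs (0 - 0) = 0) by (rewrite Rminus_diag; apply Rabs_R0).
  specialize (Hd a' 0 b' Ha ltac:(rewrite Z; apply cond_pos) Hb).
  rewrite Z in Hd. replace (0 * (0 - 0)) with 0 in Hd by ring.
  rewrite Rplus_0_r in Hd. replace (Gt a b * (a' - a) + 0 + Gw a b * (b' - b))
    with (Gt a b * (a' - a) + Gw a b * (b' - b)) in Hd by ring. now rewrite Rplus_0_r in Hd.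
Qed.

Lemma is_derive_tangent_bounds f s0 l e : is_derive f s0 l -> 0 < e ->
  exists d, 0 < d /\ forall y, Rabs (y - s0) < d ->
    Rabs (f y - f s0 - l * (y - s0)) <= e * Rabs (y - s0) /\
    Rabs (f y - f s0) <= (Rabs l + 1) * Rabs (y - s0).
Proof.
  intros H He. destruct (is_derive_linear_approx f s0 l H (Rmin e 1) ltac:(apply Rmin_pos; lra))
    as [d [Hd Hf]].
  exists d; split; [exact Hd|]. intros y Hy. specialize (Hf y Hy).
  pose proof (Rmin_l e 1). pose proof (Rmin_r e 1). pose proof (Rabs_pos (y - s0)). split; [nra|].
  replace (f y - f s0) with ((f y - f s0 - l * (y - s0)) + l * (y - s0)) by ring.
  eapply Rle_trans; [apply Rabs_triang|]. rewrite Rabs_mult. nra.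
Qed.

Lemma Rabs_lin3_le D0 D1 D2 u0 u1 u2 e :
  Rabs u0 <= e -> Rabs u1 <= e -> Rabs u2 <= e ->
  Rabs (D0 * u0 + D1 * u1 + D2 * u2) <= (Rabs D0 + Rabs D1 + Rabs D2) * e.
Proof.
  intros H0 H1 H2. eapply Rle_trans; [apply Rabs_triang|].
  eapply Rle_trans; [apply Rplus_le_compat_r, Rabs_triang|]. rewrite !Rabs_mult.
  pose proof (Rabs_pos D0). pose proof (Rabs_pos D1). pose proof (Rabs_pos D2). nra.
Qed.

(* The composite differs from its tangent by the Frechet error of F at the moved point, which is
   small relative to the (Lipschitz) displacement, plus D applied to the tangent errors of the path. *)
Lemma is_derive_comp3 F Ft F1 F2 al be ga s0 al' be' ga' :
  has_C1_partials3 F Ft F1 F2 (al s0) (be s0) (ga s0) ->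
  is_derive al s0 al' -> is_derive be s0 be' -> is_derive ga s0 ga' ->
  is_derive (fun s => F (al s) (be s) (ga s)) s0
    (Ft (al s0) (be s0) (ga s0) * al' + F1 (al s0) (be s0) (ga s0) * be'
     + F2 (al s0) (be s0) (ga s0) * ga').
Proof.
  intros HF Ha Hb Hc. apply linear_approx_is_derive. intros e He.
  set (D0 := Ft (al s0) (be s0) (ga s0)). set (D1 := F1 (al s0) (be s0) (ga s0)).
  set (D2 := F2 (al s0) (be s0) (ga s0)).
  set (K := Rabs al' + Rabs be' + Rabs ga' + 3). set (M := Rabs D0 + Rabs D1 + Rabs D2 + 1).
  pose proof (Rabs_pos al'). pose proof (Rabs_pos be'). pose proof (Rabs_pos ga').
  pose proof (Rabs_pos D0). pose proof (Rabs_pos D1). pose proof (Rabs_pos D2).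
  assert (HK : 0 < K) by (unfold K; lra). assert (HM : 0 < M) by (unfold M; lra).
  assert (HeK : 0 < e / (2 * K)) by (apply Rdiv_lt_0_compat; lra).
  assert (HeM : 0 < e / (2 * M)) by (apply Rdiv_lt_0_compat; lra).
  destruct (has_C1_partials3_linear_approx _ _ _ _ _ _ _ HF (mkposreal _ HeK)) as [[dF HdF] HFa].
  simpl in HFa. fold D0 D1 D2 in HFa.
  destruct (is_derive_tangent_bounds _ _ _ _ Ha HeM) as [da [Hda Ha']].
  destruct (is_derive_tangent_bounds _ _ _ _ Hb HeM) as [db [Hdb Hb']].
  destruct (is_derive_tangent_bounds _ _ _ _ Hc HeM) as [dc [Hdc Hc']].
  set (d := Rmin (Rmin da db) (Rmin dc (dF / K))).
  assert (Hd : 0 < d) by (unfold d; repeat apply Rmin_pos; auto; apply Rdiv_lt_0_compat; lra).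
  assert (Hdd : d <= da /\ d <= db /\ d <= dc /\ d <= dF / K) by (unfold d; Rmin_facts; lra).
  exists d; split; [exact Hd|]. intros y Hy.
  destruct (Ha' y ltac:(lra)) as [Ta La]. destruct (Hb' y ltac:(lra)) as [Tb Lb].
  destruct (Hc' y ltac:(lra)) as [Tc Lc].
  set (h := Rabs (y - s0)) in *. assert (Hh : 0 <= h) by apply Rabs_pos.
  pose proof (Rabs_pos (al y - al s0)). pose proof (Rabs_pos (be y - be s0)).
  pose proof (Rabs_pos (ga y - ga s0)).
  assert (Sum : Rabs (al y - al s0) + Rabs (be y - be s0) + Rabs (ga y - ga s0) <= K * h)
    by (unfold K; nra).
  assert (HhK : K * h < dF).
  { apply Rlt_le_trans with (K * (dF / K)); [apply Rmult_lt_compat_l; lra|right; field; lra]. }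
  specialize (HFa (al y) (be y) (ga y) ltac:(lra) ltac:(lra) ltac:(lra)).
  pose proof (Rabs_lin3_le D0 D1 D2 _ _ _ _ Ta Tb Tc) as Q.
  replace (F (al y) (be y) (ga y) - F (al s0) (be s0) (ga s0)
           - (D0 * al' + D1 * be' + D2 * ga') * (y - s0))
    with ((F (al y) (be y) (ga y) - F (al s0) (be s0) (ga s0)
           - (D0 * (al y - al s0) + D1 * (be y - be s0) + D2 * (ga y - ga s0)))
          + (D0 * (al y - al s0 - al' * (y - s0)) + D1 * (be y - be s0 - be' * (y - s0))
             + D2 * (ga y - ga s0 - ga' * (y - s0)))) by ring.
  eapply Rle_trans; [apply Rabs_triang|].
  assert (Q1 : e / (2 * K) * (K * h) = e / 2 * h) by (field; lra).
  assert (Q2 : (Rabs D0 + Rabs D1 + Rabs D2) * (e / (2 * M) * h) <= e / 2 * h).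
  { apply Rle_trans with (M * (e / (2 * M) * h)); [apply Rmult_le_compat_r; [|unfold M]; nra|].
    right; field; lra. }
  nra.
Qed.

Lemma is_derive_comp2 G Gt Gw al be s0 al' be' :
  has_C1_partials G Gt Gw (al s0) (be s0) -> is_derive al s0 al' -> is_derive be s0 be' ->
  is_derive (fun s => G (al s) (be s)) s0 (Gt (al s0) (be s0) * al' + Gw (al s0) (be s0) * be').
Proof.
  intros HG Ha Hb.
  eapply is_derive_replace.
  - exact (is_derive_comp3 _ _ _ _ al (fun _ => 0) be s0 al' 0 be'
      (has_C1_partials3_of_2d G Gt Gw _ 0 _ HG) Ha (is_derive_Rconst _ _) Hb).
  - cbv beta. ring.
Qed.

(* The Lipschitz bound on Y turns the Frechet error o(|s - s0| + |Y s - Y s0|) of G into o(|s - s0|). *)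
Lemma is_derive_implicit G Gt Gw (Y w : R -> R) s0 l :
  has_C1_partials G Gt Gw s0 (Y s0) -> Gw s0 (Y s0) <> 0 ->
  (exists L d, 0 < d /\ forall s, Rabs (s - s0) < d -> Rabs (Y s - Y s0) <= L * Rabs (s - s0)) ->
  (exists d, 0 < d /\ forall s, Rabs (s - s0) < d -> G s (Y s) = w s) -> is_derive w s0 l ->
  is_derive Y s0 ((l - Gt s0 (Y s0)) / Gw s0 (Y s0)).
Proof.
  intros HG Hb [L0 [dL [HdL HL]]] [dE [HdE HE]] Hw. apply linear_approx_is_derive. intros e He.
  set (a := Gt s0 (Y s0)). set (b := Gw s0 (Y s0)). set (L := Rabs L0 + 1).
  assert (HL' : forall s, Rabs (s - s0) < dL -> Rabs (Y s - Y s0) <= L * Rabs (s - s0)).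
  { intros s Hs. specialize (HL s Hs). pose proof (Rle_abs L0). pose proof (Rabs_pos (s - s0)).
    unfold L. nra. }
  assert (Hb' : 0 < Rabs b) by (apply Rabs_pos_lt; exact Hb).
  set (eta := e * Rabs b / (L + 2)).
  assert (Heta : 0 < eta) by (unfold eta, L; pose proof (Rabs_pos L0);
    apply Rdiv_lt_0_compat; [apply Rmult_lt_0_compat|]; lra).
  destruct (has_C1_partials_linear_approx _ _ _ _ _ HG (mkposreal eta Heta)) as [[dG HdG] HGa].
  simpl in HGa. fold a b in HGa.
  destruct (is_derive_linear_approx _ _ _ Hw eta Heta) as [dw [Hdw Hwa]].
  set (d := Rmin (Rmin dL dE) (Rmin dw (Rmin dG (dG / L)))).
  assert (HLp : 0 < L) by (unfold L; pose proof (Rabs_pos L0); lra).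
  assert (Hd : 0 < d) by (unfold d; repeat apply Rmin_pos; auto; apply Rdiv_lt_0_compat; lra).
  assert (Hdd : d <= dL /\ d <= dE /\ d <= dw /\ d <= dG /\ d <= dG / L) by (unfold d; Rmin_facts; lra).
  exists d; split; [exact Hd|]. intros s Hs.
  specialize (HL' s ltac:(lra)).
  set (h := Rabs (s - s0)) in *. pose proof (Rabs_pos (s - s0)) as Hh. fold h in Hh.
  assert (HY : Rabs (Y s - Y s0) < dG).
  { apply Rle_lt_trans with (L * h); [exact HL'|].
    apply Rlt_le_trans with (L * (dG / L)); [apply Rmult_lt_compat_l; lra|right; field; lra]. }
  specialize (HGa s (Y s) ltac:(unfold h in *; lra) HY). specialize (Hwa s ltac:(unfold h in *; lra)).
  fold h in HGa, Hwa.
  rewrite !HE in HGa by (unfold h in *; rewrite ?Rminus_diag, ?Rabs_R0; lra).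
  assert (E : Y s - Y s0 - (l - a) / b * (s - s0) =
              ((w s - w s0 - l * (s - s0)) - (w s - w s0 - (a * (s - s0) + b * (Y s - Y s0)))) / b)
    by (field; exact Hb).
  rewrite E, Rabs_div by exact Hb. apply (Rmult_le_reg_r (Rabs b)); [exact Hb'|].
  unfold Rdiv. rewrite Rmult_assoc, Rinv_l, Rmult_1_r by lra.
  eapply Rle_trans; [apply Rabs_triang|]. rewrite Rabs_Ropp.
  assert (eta * (h + L * h) + eta * h <= e * h * Rabs b); [|fold h in HGa; nra].
  replace (eta * (h + L * h) + eta * h) with (eta * (L + 2) * h) by ring.
  unfold eta. right. field. lra.
Qed.

(* Uniform continuity on [a, b], extracted from the compactness of [a, b]. *)
Lemma continuity_2d_pt_RInt_param_le (h : R -> R -> R -> R) a b p q : a <= b ->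
  (forall x p q, continuity_3d_pt h x p q) ->
  continuity_2d_pt (fun p q => RInt (fun x => h x p q) a b) p q.
Proof.
  intros Hab Hc eps.
  set (e' := eps / (2 * (b - a) + 2)).
  assert (He' : 0 < e') by (unfold e'; apply Rdiv_lt_0_compat; [apply cond_pos|lra]).
  assert (X : forall x, {d : posreal | forall x' p' q', Rabs (x' - x) < d -> Rabs (p' - p) < d ->
             Rabs (q' - q) < d -> Rabs (h x' p' q' - h x p q) < e'}).
  { intros x. apply constructive_indefinite_description. exact (Hc x p q (mkposreal e' He')). }
  destruct (compactness_value_1d a b (fun x => proj1_sig (X x))) as [d Hd].
  exists d. intros p' q' Hp Hq.
  assert (Ex : forall p q, ex_RInt (fun x => h x p q) a b).
  { intros. apply ex_RInt_continuous_R. intros z. apply continuity_3d_pt_continuous_1, Hc. }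
  rewrite <- RInt_Rminus by apply Ex.
  apply Rle_lt_trans with ((b - a) * (2 * e')).
  - apply abs_RInt_le_const; auto.
    + apply (ex_RInt_minus (V := R_NormedModule)); apply Ex.
    + intros x Hx. apply Rnot_lt_le. intros Hcon. apply (Hd x Hx).
      intros [t [Ht [Hxt Hdt]]]. pose proof (proj2_sig (X t)) as Pt. simpl in Hxt, Hdt.
      assert (A1 := Pt x p' q' Hxt ltac:(lra) ltac:(lra)).
      assert (A2 := Pt x p q Hxt ltac:(rewrite Rminus_diag, Rabs_R0; apply cond_pos)
                                   ltac:(rewrite Rminus_diag, Rabs_R0; apply cond_pos)).
      assert (A3 : Rabs (h x p' q' - h x p q) <= Rabs (h x p' q' - h t p q) + Rabs (h x p q - h t p q)).
      { replace (h x p' q' - h x p q) with ((h x p' q' - h t p q) - (h x p q - h t p q)) by ring.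
        eapply Rle_trans; [apply Rabs_triang|]. rewrite Rabs_Ropp. lra. }
      lra.
  - assert (E : (b - a) * (2 * e') = eps - 2 * e') by (unfold e'; field; lra).
    rewrite E. lra.
Qed.

Lemma continuity_2d_pt_RInt_param (h : R -> R -> R -> R) a b p q :
  (forall x p q, continuity_3d_pt h x p q) ->
  continuity_2d_pt (fun p q => RInt (fun x => h x p q) a b) p q.
Proof.
  intros Hc. destruct (Rle_dec a b) as [Hab|Hab]; [now apply continuity_2d_pt_RInt_param_le|].
  assert (Ex : forall p q, ex_RInt (fun x => h x p q) b a).
  { intros. apply ex_RInt_continuous_R. intros z. apply continuity_3d_pt_continuous_1, Hc. }
  intros eps. destruct (continuity_2d_pt_RInt_param_le h b a p q ltac:(lra) Hc eps) as [d H].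
  exists d. intros p' q' H1 H2.
  rewrite <- (opp_RInt_swap (V := R_CompleteNormedModule) (fun x => h x p' q')) by apply Ex.
  rewrite <- (opp_RInt_swap (V := R_CompleteNormedModule) (fun x => h x p q)) by apply Ex.
  unfold opp; simpl. rewrite <- Rabs_Ropp. replace (- (- RInt (fun x => h x p' q') b a
    - - RInt (fun x => h x p q) b a)) with (RInt (fun x => h x p' q') b a - RInt (fun x => h x p q) b a)
    by ring.
  apply H; auto.
Qed.

Lemma is_derive_RInt_param_R (f df : R -> R -> R) a b u0 :
  (forall u x, is_derive (fun u => f u x) u (df u x)) ->
  (forall u x, continuity_2d_pt df u x) ->
  (forall u, ex_RInt (fun x => f u x) a b) ->
  is_derive (fun u => RInt (fun x => f u x) a b) u0 (RInt (fun x => df u0 x) a b).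
Proof.
  intros Hd Hc Hi.
  assert (E : forall u x, Derive (fun z => f z x) u = df u x) by (intros; apply is_derive_unique, Hd).
  rewrite <- (RInt_ext_R (fun x => Derive (fun u => f u x) u0)) by (intros; apply E).
  apply (is_derive_RInt_param f a b u0).
  - exists (mkposreal 1 Rlt_0_1). intros u _ x _. eexists. apply Hd.
  - intros x _ eps. destruct (Hc u0 x eps) as [d Hd']. exists d. intros u v Hu Hv.
    rewrite !E. apply Hd'; assumption.
  - exists (mkposreal 1 Rlt_0_1). intros. apply Hi.
Qed.

Section Integral_upper_limit.
Variables (G : R -> R -> R) (c : R).
Hypothesis HG : forall t y, continuity_2d_pt G t y.

Lemma ex_RInt_continuity_2d_pt y a b : ex_RInt (fun tau => G tau y) a b.
Proof. apply ex_RInt_continuous_R. intros. apply continuity_2d_pt_continuous_1, HG. Qed.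

Lemma is_derive_RInt_upper t y : is_derive (fun s => RInt (fun tau => G tau y) c s) t (G t y).
Proof.
  apply (is_derive_RInt_R (fun tau => G tau y)). intros. apply continuity_2d_pt_continuous_1, HG.
Qed.

Lemma continuity_2d_pt_RInt_upper t y :
  continuity_2d_pt (fun t y => RInt (fun tau => G tau y) c t) t y.
Proof.
  intros eps.
  assert (He2 : 0 < eps / 2) by (apply Rdiv_lt_0_compat; [apply cond_pos|lra]).
  destruct (continuity_2d_pt_RInt_param (fun x _ q => G x q) c t 0 y) with (eps := mkposreal _ He2)
    as [d1 H1].
  { intros. apply continuity_3d_pt_of_2d_13, HG. }
  destruct (HG t y (mkposreal 1 Rlt_0_1)) as [d2 H2]. simpl in H1, H2.
  set (M := Rabs (G t y) + 1).
  assert (HM : 0 < M) by (unfold M; pose proof (Rabs_pos (G t y)); lra).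
  assert (HeM : 0 < eps / (2 * M)) by (apply Rdiv_lt_0_compat; [apply cond_pos|lra]).
  set (d := Rmin (Rmin d1 d2) (eps / (2 * M))).
  assert (Hd : 0 < d) by (unfold d; repeat apply Rmin_pos; try apply cond_pos; lra).
  assert (Hdd : d <= d1 /\ d <= d2 /\ d <= eps / (2 * M)) by (unfold d; Rmin_facts; lra).
  exists (mkposreal d Hd). simpl. intros t' y' Ht Hy.
  rewrite <- (RInt_Chasles_R (fun tau => G tau y') c t t') by apply ex_RInt_continuity_2d_pt.
  specialize (H1 0 y' ltac:(rewrite Rminus_diag, Rabs_R0; apply cond_pos) ltac:(lra)).
  assert (B : Rabs (RInt (fun tau => G tau y') t t') <= Rabs (t' - t) * M).
  { apply Rabs_RInt_le_const; [apply ex_RInt_continuity_2d_pt|]. intros x Hx.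
    apply Rabs_sub_le_of_between in Hx.
    specialize (H2 x y' ltac:(lra) ltac:(lra)).
    unfold M. pose proof (Rabs_triang_inv (G x y') (G t y)). lra. }
  assert (B2 : Rabs (t' - t) * M <= eps / 2).
  { apply Rle_trans with (eps / (2 * M) * M); [apply Rmult_le_compat_r; lra|].
    right; field; lra. }
  replace (RInt (fun tau => G tau y') c t + RInt (fun tau => G tau y') t t' -
     RInt (fun tau => G tau y) c t) with
    ((RInt (fun tau => G tau y') c t - RInt (fun tau => G tau y) c t) +
      RInt (fun tau => G tau y') t t') by ring.
  eapply Rle_lt_trans; [apply Rabs_triang|]. lra.
Qed.

Lemma is_derive_RInt_upper_param (dG : R -> R -> R) t y :
  (forall t y, is_derive (fun s => G t s) y (dG t y)) ->
  (forall t y, continuity_2d_pt dG t y) ->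
  is_derive (fun s => RInt (fun tau => G tau s) c t) y (RInt (fun tau => dG tau y) c t).
Proof.
  intros Hd Hc. apply (is_derive_RInt_param_R (fun u x => G x u) (fun u x => dG x u)).
  - intros. apply Hd.
  - intros. apply (continuity_2d_pt_swap dG), Hc.
  - intros. apply ex_RInt_continuity_2d_pt.
Qed.
End Integral_upper_limit.

(* Fubini: both sides have the same derivative in the upper limit d. *)
Lemma RInt_RInt_swap (G : R -> R -> R) a b c d :
  (forall x y, continuity_2d_pt G x y) ->
  RInt (fun x => RInt (fun y => G x y) c d) a b = RInt (fun y => RInt (fun x => G x y) a b) c d.
Proof.
  intros HG.
  set (G' := fun y x => G x y).
  assert (HG' : forall y x, continuity_2d_pt G' y x) by (intros; apply (continuity_2d_pt_swap G), HG).
  set (K := fun u => RInt (fun x => RInt (fun y => G x y) c u) a b).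
  set (Om := fun u => RInt (fun x => G x u) a b).
  assert (COm : forall u, continuous Om u).
  { intros u. apply (continuity_2d_pt_continuous_1 (fun p _ => RInt (fun x => G x p) a b) u 0).
    apply (continuity_2d_pt_RInt_param (fun x p _ => G x p)). intros.
    apply continuity_3d_pt_of_2d_12, HG. }
  assert (DK : forall u, is_derive K u (Om u)).
  { intros u.
    apply (is_derive_RInt_param_R (fun u x => RInt (fun y => G' y x) c u) (fun u x => G' u x)).
    - intros. apply is_derive_RInt_upper, HG'.
    - exact HG'.
    - intros v. apply ex_RInt_continuous_R. intros x.
      apply (continuity_2d_pt_continuous_2 (fun t y => RInt (fun tau => G' tau y) c t) v x).
      apply continuity_2d_pt_RInt_upper, HG'. }
  assert (Kc : K c = 0).
  { unfold K. rewrite (RInt_ext_R _ (fun _ => 0)), RInt_Rconst; [apply Rmult_0_r|].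
    intros. apply (RInt_point (V := R_CompleteNormedModule)). }
  change (K d = RInt Om c d). rewrite (RInt_is_derive K Om) by auto. lra.
Qed.

Definition x_periodic (F : R -> R -> R -> R) : Prop :=
  forall t x y, F t (x + 2 * PI) y = F t x y.

Lemma x_periodic_d_2 F : x_periodic F -> x_periodic (d_2 F).
Proof. intros Hp t x y. unfold d_2. apply Derive_ext. intros; apply Hp. Qed.

Lemma x_periodic_d_1 F : smooth3 F -> x_periodic F -> x_periodic (d_1 F).
Proof.
  intros Hs Hp t x y. unfold d_1 at 2. rewrite (Derive_ext _ (fun s => F t (s + 2 * PI) y))
    by (intros; symmetry; apply Hp).
  symmetry. apply is_derive_unique, smooth3_is_derive_1_shift, Hs.
Qed.

Section Average_linear.
Variables g h : R -> R.
Hypotheses (Hg : forall x, continuous g x) (Hh : forall x, continuous h x).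

Lemma avg_plus : avg (fun x => g x + h x) = avg g + avg h.
Proof. unfold avg. rewrite RInt_Rplus by (apply ex_RInt_continuous_R; auto). ring. Qed.

Lemma avg_minus : avg (fun x => g x - h x) = avg g - avg h.
Proof. unfold avg. rewrite RInt_Rminus by (apply ex_RInt_continuous_R; auto). ring. Qed.

Lemma avg_scal c : avg (fun x => c * g x) = c * avg g.
Proof. unfold avg. rewrite RInt_Rscal by (apply ex_RInt_continuous_R; auto). ring. Qed.
End Average_linear.

Lemma avg_ext (g h : R -> R) : (forall x, g x = h x) -> avg g = avg h.
Proof. intros E. unfold avg. f_equal. apply RInt_ext_R. auto. Qed.

Lemma avg_const c : avg (fun _ => c) = c.
Proof. unfold avg. rewrite RInt_Rconst. field. pose proof PI_RGT_0. lra. Qed.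

Lemma avg_opp (g : R -> R) : (forall x, continuous g x) -> avg (fun x => - g x) = - avg g.
Proof.
  intros H. rewrite (avg_ext _ (fun x => -1 * g x)) by (intros; ring).
  rewrite avg_scal by auto. ring.
Qed.

(* Splitting [c, 2 PI + c] at 2 PI and translating the piece [2 PI, 2 PI + c] back to [0, c]. *)
Lemma avg_shift (g : R -> R) c : (forall x, continuous g x) -> (forall x, g (x + 2 * PI) = g x) ->
  avg (fun z => g (z + c)) = avg g.
Proof.
  intros Hc Hp. unfold avg. f_equal.
  assert (Ex : forall a b, ex_RInt g a b) by (intros; apply ex_RInt_continuous_R, Hc).
  assert (Lin : forall u a b, RInt (fun z => g (z + u)) a b = RInt g (a + u) (b + u)).
  { intros u a b. pose proof (RInt_comp_lin (V := R_CompleteNormedModule) g 1 u a b) as E.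
    rewrite !Rmult_1_l in E. rewrite <- E by apply Ex. apply RInt_ext_R. intros.
    unfold scal; simpl; unfold mult; simpl. now rewrite !Rmult_1_l, Rplus_comm. }
  rewrite Lin, Rplus_0_l.
  rewrite <- (RInt_Chasles_R g c (2 * PI) (2 * PI + c)) by apply Ex.
  replace (RInt g (2 * PI) (2 * PI + c)) with (RInt g 0 c).
  - rewrite Rplus_comm. apply RInt_Chasles_R; apply Ex.
  - rewrite (RInt_ext_R g (fun z => g (z + 2 * PI))) by (intros; symmetry; apply Hp).
    rewrite Lin. f_equal; ring.
Qed.

Lemma avgz_continuity_2d_pt F t y : continuous3 F -> continuity_2d_pt (avgz F) t y.
Proof.
  intros Hc. unfold avgz, avg. apply continuity_2d_pt_mult; [apply continuity_2d_pt_const|].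
  apply (continuity_2d_pt_RInt_param (fun x p q => F p x q)). intros.
  apply continuity_3d_pt_swap12, Hc.
Qed.

Lemma avgz_continuous_2 F t y : continuous3 F -> continuous (fun s => avgz F t s) y.
Proof. intros Hc. apply continuity_2d_pt_continuous_2, avgz_continuity_2d_pt, Hc. Qed.

Lemma is_derive_avgz_2 F F2 t y : continuous3 F -> continuous3 F2 ->
  (forall t x y, is_derive (fun s => F t x s) y (F2 t x y)) ->
  is_derive (fun s => avgz F t s) y (avgz F2 t y).
Proof.
  intros Hc Hc2 Hd. unfold avgz, avg. apply is_derive_scal.
  apply (is_derive_RInt_param_R (fun u x => F t x u) (fun u x => F2 t x u)).
  - intros. apply Hd.
  - intros. apply (continuity_2d_pt_swap (fun v u => F2 t v u)), continuity_3d_pt_2d_23, Hc2.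
  - intros. apply ex_RInt_continuous_R. intros. apply continuity_3d_pt_continuous_2, Hc.
Qed.

Lemma is_derive_avgz_t F Ft t y : continuous3 F -> continuous3 Ft ->
  (forall t x y, is_derive (fun s => F s x y) t (Ft t x y)) ->
  is_derive (fun s => avgz F s y) t (avgz Ft t y).
Proof.
  intros Hc Hct Hd. unfold avgz, avg. apply is_derive_scal.
  apply (is_derive_RInt_param_R (fun u x => F u x y) (fun u x => Ft u x y)).
  - intros. apply Hd.
  - intros. apply continuity_3d_pt_2d_12, Hct.
  - intros. apply ex_RInt_continuous_R. intros. apply continuity_3d_pt_continuous_2, Hc.
Qed.

Lemma avgz_eq_0_of_is_derive_1 F F1 t y : continuous3 F1 ->
  (forall t x y, is_derive (fun s => F t s y) x (F1 t x y)) -> x_periodic F -> avgz F1 t y = 0.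
Proof.
  intros Hc Hd Hp. unfold avgz, avg.
  rewrite (RInt_is_derive (fun s => F t s y)).
  - replace (2 * PI) with (0 + 2 * PI) by ring. rewrite Hp. ring.
  - intros. apply Hd.
  - intros. apply continuity_3d_pt_continuous_2, Hc.
Qed.

Lemma smooth3_is_derive_avgz_2 F t y : smooth3 F ->
  is_derive (fun s => avgz F t s) y (avgz (d_2 F) t y).
Proof. intros H. apply is_derive_avgz_2; auto with smooth. intros; now apply smooth3_is_derive_2. Qed.

Lemma smooth3_is_derive_avgz_t F t y : smooth3 F ->
  is_derive (fun s => avgz F s y) t (avgz (d_t F) t y).
Proof. intros H. apply is_derive_avgz_t; auto with smooth. intros; now apply smooth3_is_derive_t. Qed.

Lemma smooth3_avgz_d_1 F t y : smooth3 F -> x_periodic F -> avgz (d_1 F) t y = 0.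
Proof.
  intros H Hp. apply (avgz_eq_0_of_is_derive_1 F); auto with smooth.
  intros; now apply smooth3_is_derive_1.
Qed.

Lemma smooth3_has_C1_partials_avgz F t y : smooth3 F ->
  has_C1_partials (avgz F) (avgz (d_t F)) (avgz (d_2 F)) t y.
Proof.
  intros H. split; [|split; apply avgz_continuity_2d_pt; auto with smooth].
  exists (mkposreal 1 Rlt_0_1). intros.
  split; [apply smooth3_is_derive_avgz_t|apply smooth3_is_derive_avgz_2]; exact H.
Qed.

Lemma smooth3_d_1_d_2 F t x y : smooth3 F -> d_1 (d_2 F) t x y = d_2 (d_1 F) t x y.
Proof.
  intros H. unfold d_1, d_2. apply (Schwarz (fun u v => F t u v) x y).
  - exists (mkposreal 1 Rlt_0_1). intros u v _ _.
    repeat split; eexists; [apply (smooth3_is_derive_1 F)|apply (smooth3_is_derive_2 F)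
      |apply (smooth3_is_derive_1 (d_2 F))|apply (smooth3_is_derive_2 (d_1 F))]; auto with smooth.
  - apply (continuity_3d_pt_2d_23 (d_1 (d_2 F)) t). apply smooth3_continuous3; auto with smooth.
  - apply (continuity_3d_pt_2d_23 (d_2 (d_1 F)) t). apply smooth3_continuous3; auto with smooth.
Qed.

Lemma smooth3_is_derive_avgz_mult_2 F G t y : smooth3 F -> smooth3 G ->
  is_derive (fun s => avgz (fun t x y => F t x y * G t x y) t s) y
    (avgz (fun t x y => d_2 F t x y * G t x y + F t x y * d_2 G t x y) t y).
Proof.
  intros HF HG. apply is_derive_avgz_2; [solve_continuous3|solve_continuous3|].
  intros. apply is_derive_Rmult; now apply smooth3_is_derive_2.
Qed.

Lemma sum_f_R0_term_le (f : nat -> R) n k :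
  (forall i, 0 <= f i) -> (k <= n)%nat -> f k <= sum_f_R0 f n.
Proof.
  intros H Hk. induction n as [|n IH].
  - inversion Hk. simpl. lra.
  - simpl. destruct (Nat.eq_dec k (S n)) as [->|Hne].
    + pose proof (cond_pos_sum f n H). lra.
    + pose proof (H (S n)). assert (f k <= sum_f_R0 f n) by (apply IH; lia). lra.
Qed.

Lemma RInt_sq_Derive_lt_of_H10norm (g : R -> R) e :
  (forall k x, continuous (Derive_n g k) x) -> H10norm g < e ->
  RInt (fun y => Derive g y ^ 2) 0 1 < e ^ 2.
Proof.
  intros Hc Hg. set (f := fun k => RInt (fun y => Derive_n g k y ^ 2) 0 1).
  assert (Hf : forall k, 0 <= f k).
  { intros k. apply RInt_ge_0; [lra| |intros; apply pow2_ge_0].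
    apply ex_RInt_continuous_R. intros x. simpl.
    apply continuous_Rmult; [|apply continuous_Rmult; [|apply continuous_Rconst]]; apply Hc. }
  pose proof (sum_f_R0_term_le f 10 1 Hf ltac:(lia)) as H1.
  unfold H10norm in Hg. fold f in Hg.
  pose proof (sqrt_sqrt (sum_f_R0 f 10) ltac:(specialize (Hf 1%nat); lra)).
  pose proof (sqrt_pos (sum_f_R0 f 10)).
  change (f 1%nat < e ^ 2). nra.
Qed.

Lemma Rabs_le_RInt_sq_Derive (g : R -> R) y :
  (forall x, ex_derive g x) -> (forall x, continuous (Derive g) x) -> g 0 = 0 -> 0 <= y <= 1 ->
  Rabs (g y) <= RInt (fun x => Derive g x ^ 2) 0 1 + / 4.
Proof.
  intros Hd Hc H0 Hy.
  assert (Ha : forall x, continuous (fun y => Rabs (Derive g y)) x).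
  { intros. apply (continuous_comp (Derive g) Rabs); [apply Hc|apply continuous_Rabs]. }
  assert (Hsq : forall x, continuous (fun y => Derive g y ^ 2) x).
  { intros. simpl. apply continuous_Rmult; [|apply continuous_Rmult; [|apply continuous_Rconst]];
    apply Hc. }
  assert (E : g y = RInt (Derive g) 0 y) by (rewrite RInt_Derive; auto; lra).
  rewrite E. eapply Rle_trans; [apply abs_RInt_le; [lra|apply ex_RInt_continuous_R; auto]|].
  apply Rle_trans with (RInt (fun x => Rabs (Derive g x)) 0 1).
  { rewrite <- (RInt_Chasles_R _ 0 y 1) by (apply ex_RInt_continuous_R; auto).
    assert (0 <= RInt (fun x => Rabs (Derive g x)) y 1); [|lra].
    apply RInt_ge_0; [lra|apply ex_RInt_continuous_R; auto|intros; apply Rabs_pos]. }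
  assert (Q : RInt (fun _ => / 4) 0 1 = / 4 :> R) by (rewrite RInt_Rconst; ring).
  rewrite <- Q.
  rewrite <- RInt_Rplus by (apply ex_RInt_continuous_R; auto using continuous_Rconst).
  apply RInt_le; [lra|apply ex_RInt_continuous_R; auto|
    apply ex_RInt_continuous_R; intros; apply continuous_Rplus; auto using continuous_Rconst|].
  intros x _. pose proof (pow2_abs (Derive g x)). pose proof (pow2_ge_0 (Rabs (Derive g x) - / 2)).
  nra.
Qed.

(** * The averaged flow *)

Section Couette.
Variables (theta0 T : R) (omega psi : R -> R -> R -> R).
Hypothesis Htheta : 0 < theta0.
Hypothesis Htheta8 : theta0 <= / 8.
Hypothesis Hom : smooth3 omega.
Hypothesis Hps : smooth3 psi.
Hypothesis Hom_per : x_periodic omega.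
Hypothesis Hps_per : x_periodic psi.
Hypothesis Htransport : forall t x y, 0 <= t <= T -> 0 <= y <= 1 ->
  d_t omega t x y + y * d_1 omega t x y
  + ux psi t x y * d_1 omega t x y + d_1 psi t x y * d_2 omega t x y = 0.
Hypothesis Hlaplace : forall t x y, 0 <= t <= T -> 0 <= y <= 1 ->
  d_1 (d_1 psi) t x y + d_2 (d_2 psi) t x y = omega t x y.
Hypothesis Hwall : forall t x, 0 <= t <= T -> psi t x 0 = 0 /\ psi t x 1 = 0.
Hypothesis Hmean : forall t, 0 <= t <= T ->
  RInt (fun x => RInt (fun y => omega t x y) 0 1) 0 (2 * PI) = 0.
Hypothesis Hsupp : forall t x y, 0 <= t <= T -> 0 <= y <= 1 ->
  (y < theta0 \/ 1 - theta0 < y) -> omega t x y = 0.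
Hypothesis Hsmall : forall t, 0 <= t <= T -> H10norm (fun y => avgz omega t y) < / 2.

Definition mean_vort := avgz omega.
Definition mean_ux := avgz (ux psi).
Definition mean_psi := avgz psi.
Definition mean_psi_y := avgz (d_2 psi).
Definition mean_psi_yy := avgz (d_2 (d_2 psi)).
Definition mean_psi_yyy := avgz (d_2 (d_2 (d_2 psi))).

Lemma mean_ux_eq t y : mean_ux t y = - mean_psi_y t y.
Proof.
  unfold mean_ux, mean_psi_y, avgz, ux. apply avg_opp.
  intros; apply smooth3_continuous_1; auto with smooth.
Qed.

Lemma is_derive_mean_psi t y : is_derive (fun s => mean_psi t s) y (mean_psi_y t y).
Proof. apply smooth3_is_derive_avgz_2, Hps. Qed.

Lemma is_derive_mean_psi_yy t y : is_derive (fun s => mean_psi_yy t s) y (mean_psi_yyy t y).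
Proof. apply smooth3_is_derive_avgz_2; auto with smooth. Qed.

Lemma is_derive_mean_ux t y : is_derive (fun s => mean_ux t s) y (- mean_psi_yy t y).
Proof.
  apply (is_derive_ext (fun s => - mean_psi_y t s)); [intros; now rewrite mean_ux_eq|].
  apply is_derive_Ropp, smooth3_is_derive_avgz_2; auto with smooth.
Qed.

Lemma is_derive_mean_vort t y : is_derive (fun s => mean_vort t s) y (avgz (d_2 omega) t y).
Proof. apply smooth3_is_derive_avgz_2, Hom. Qed.

Lemma continuity_2d_pt_mean_ux t y : continuity_2d_pt mean_ux t y.
Proof.
  apply (continuity_2d_pt_ext (fun t y => - mean_psi_y t y)); [intros; now rewrite mean_ux_eq|].
  apply continuity_2d_pt_opp, avgz_continuity_2d_pt; auto with smooth.
Qed.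

Lemma continuity_2d_pt_mean_psi_yy t y : continuity_2d_pt mean_psi_yy t y.
Proof. apply avgz_continuity_2d_pt; auto with smooth. Qed.

Lemma continuity_2d_pt_mean_psi_yyy t y : continuity_2d_pt mean_psi_yyy t y.
Proof. apply avgz_continuity_2d_pt; auto with smooth. Qed.

Lemma continuous_mean_vort t y : continuous (fun s => mean_vort t s) y.
Proof. apply avgz_continuous_2; auto with smooth. Qed.

Lemma mean_psi_yy_eq_mean_vort t y : 0 <= t <= T -> 0 <= y <= 1 ->
  mean_psi_yy t y = mean_vort t y.
Proof.
  intros Ht Hy. unfold mean_psi_yy, mean_vort, avgz.
  rewrite (avg_ext _ (fun x => omega t x y - d_1 (d_1 psi) t x y))
    by (intros; rewrite <- (Hlaplace t x y) by auto; ring).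
  rewrite avg_minus by solve_continuous.
  pose proof (smooth3_avgz_d_1 (d_1 psi) t y ltac:(auto with smooth) (x_periodic_d_1 _ Hps Hps_per))
    as E.
  unfold avgz in E. rewrite E. ring.
Qed.

Lemma mean_vort_near_walls t y : 0 <= t <= T -> 0 <= y <= 1 ->
  (y < theta0 \/ 1 - theta0 < y) -> mean_vort t y = 0.
Proof.
  intros. unfold mean_vort, avgz. rewrite (avg_ext _ (fun _ => 0)) by (intros; apply Hsupp; auto).
  apply avg_const.
Qed.

Lemma Derive_n_mean_vort k t y :
  Derive_n (fun y => mean_vort t y) k y = avgz (Nat.iter k d_2 omega) t y.
Proof.
  revert y. induction k as [|k IH]; intros y; [reflexivity|].
  simpl Derive_n. rewrite (Derive_ext _ (fun y => avgz (Nat.iter k d_2 omega) t y)) by auto.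
  apply is_derive_unique, smooth3_is_derive_avgz_2, smooth3_iter_d_2, Hom.
Qed.

(* The H^10 smallness is only used through the bound |<omega>| <= 1/2. *)
Lemma Rabs_mean_vort_le t y : 0 <= t <= T -> 0 <= y <= 1 -> Rabs (mean_vort t y) <= / 2.
Proof.
  intros Ht Hy.
  assert (Hc : forall k x, continuous (Derive_n (fun y => mean_vort t y) k) x).
  { intros k x. apply (continuous_ext (fun y => avgz (Nat.iter k d_2 omega) t y)).
    - intros; symmetry; apply Derive_n_mean_vort.
    - apply avgz_continuous_2, smooth3_continuous3, smooth3_iter_d_2, Hom. }
  pose proof (RInt_sq_Derive_lt_of_H10norm _ _ Hc (Hsmall t Ht)) as H1.
  assert (H2 : Rabs (mean_vort t y) <= RInt (fun x => Derive (fun y => mean_vort t y) x ^ 2) 0 1 + / 4).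
  { apply Rabs_le_RInt_sq_Derive;
      [intros; eexists; apply is_derive_mean_vort|exact (Hc 1%nat)| |exact Hy].
    apply mean_vort_near_walls; lra. }
  replace ((/ 2) ^ 2) with (/ 4) in H1 by field. lra.
Qed.

Lemma RInt_mean_vort t : 0 <= t <= T -> RInt (fun y => mean_vort t y) 0 1 = 0 :> R.
Proof.
  intros Ht.
  assert (Hc : forall x y, continuity_2d_pt (fun x y => omega t x y) x y).
  { intros. apply continuity_3d_pt_2d_23, smooth3_continuous3, Hom. }
  assert (Hi : forall y, continuous (fun y => RInt (fun x => omega t x y) 0 (2 * PI)) y).
  { intros y.
    apply (continuity_2d_pt_continuous_2 (fun _ q => RInt (fun x => omega t x q) 0 (2 * PI)) 0).
    apply (continuity_2d_pt_RInt_param (fun x _ q => omega t x q)). intros.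
    apply continuity_3d_pt_of_2d_13, Hc. }
  unfold mean_vort, avgz, avg. rewrite RInt_Rscal by (apply ex_RInt_continuous_R, Hi).
  rewrite <- (RInt_RInt_swap (fun x y => omega t x y)), Hmean by auto. apply Rmult_0_r.
Qed.

Lemma RInt_mean_ux t : 0 <= t <= T -> RInt (fun y => mean_ux t y) 0 1 = 0 :> R.
Proof.
  intros Ht. rewrite (RInt_is_derive (fun y => - mean_psi t y)).
  - assert (Z : forall y, (y = 0 \/ y = 1) -> mean_psi t y = 0).
    { intros y Hy. unfold mean_psi, avgz. rewrite (avg_ext _ (fun _ => 0)); [apply avg_const|].
      intros x. destruct Hy as [->| ->]; apply Hwall; auto. }
    rewrite !Z by auto. ring.
  - intros. rewrite mean_ux_eq. apply is_derive_Ropp, is_derive_mean_psi.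
  - intros. apply continuity_2d_pt_continuous_2, continuity_2d_pt_mean_ux.
Qed.

Definition first_moment (t : R) : R := RInt (fun y => (1 - y) * mean_vort t y) 0 1.

(* Integrate ((y - 1) <u^x>)' = <u^x> + (1 - y) <omega> over [0, 1]. *)
Lemma mean_ux_0_eq_first_moment t : 0 <= t <= T -> mean_ux t 0 = first_moment t.
Proof.
  intros Ht.
  assert (Cu : forall y, continuous (fun s => mean_ux t s) y)
    by (intros; apply continuity_2d_pt_continuous_2, continuity_2d_pt_mean_ux).
  assert (Cb : forall y, continuous (fun s => mean_psi_yy t s) y)
    by (intros; apply continuity_2d_pt_continuous_2, continuity_2d_pt_mean_psi_yy).
  pose proof (continuous_mean_vort t) as Cw.
  transitivity (RInt (fun y => mean_ux t y + (1 - y) * mean_psi_yy t y) 0 1).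
  - rewrite (RInt_is_derive (fun y => (y - 1) * mean_ux t y)); [ring| |solve_continuous].
    intros y _. eapply is_derive_replace;
      [apply is_derive_Rmult; [apply is_derive_Rminus; [apply is_derive_Rid|apply is_derive_Rconst]
                              |apply is_derive_mean_ux]|].
    cbv beta. ring.
  - rewrite (RInt_ext_R _ (fun y => mean_ux t y + (1 - y) * mean_vort t y)).
    + rewrite RInt_Rplus by (apply ex_RInt_continuous_R; solve_continuous).
      rewrite RInt_mean_ux by exact Ht. unfold first_moment. ring.
    + intros y Hy. rewrite Rmin_left, Rmax_right in Hy by lra.
      rewrite mean_psi_yy_eq_mean_vort by (auto; lra). reflexivity.
Qed.

(** * Conservation of the wall velocity *)

Lemma d_1_psi_walls t x : 0 <= t <= T -> d_1 psi t x 0 = 0 /\ d_1 psi t x 1 = 0.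
Proof.
  intros Ht. unfold d_1.
  split; rewrite (Derive_ext _ (fun _ => 0)) by (intros; apply Hwall; auto); apply Derive_const.
Qed.

Definition vort_flux := avgz (fun t x y => d_1 psi t x y * omega t x y).
Definition d_vort_flux :=
  avgz (fun t x y => d_2 (d_1 psi) t x y * omega t x y + d_1 psi t x y * d_2 omega t x y).
Definition stress := avgz (fun t x y => d_1 psi t x y * d_2 psi t x y).
Definition d_stress :=
  avgz (fun t x y => d_2 (d_1 psi) t x y * d_2 psi t x y + d_1 psi t x y * d_2 (d_2 psi) t x y).

Lemma is_derive_vort_flux t y : is_derive (fun s => vort_flux t s) y (d_vort_flux t y).
Proof. apply smooth3_is_derive_avgz_mult_2; auto with smooth. Qed.

Lemma is_derive_stress t y : is_derive (fun s => stress t s) y (d_stress t y).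
Proof. apply smooth3_is_derive_avgz_mult_2; auto with smooth. Qed.

Lemma continuous_vort_flux t y : continuous (fun s => vort_flux t s) y.
Proof. apply avgz_continuous_2. solve_continuous3. Qed.

Lemma continuous_d_vort_flux t y : continuous (fun s => d_vort_flux t s) y.
Proof. apply avgz_continuous_2. solve_continuous3. Qed.

Lemma continuous_d_stress t y : continuous (fun s => d_stress t s) y.
Proof. apply avgz_continuous_2. solve_continuous3. Qed.

(* Averaging the transport equation: the terms y d_x omega and d_x((d_y psi - y) omega) have zero
   average, leaving d_t <omega> = - d_y <d_x psi omega>. *)
Lemma avgz_d_t_omega t y : 0 <= t <= T -> 0 <= y <= 1 ->
  avgz (d_t omega) t y = - d_vort_flux t y.
Proof.
  intros Ht Hy.
  set (G1 := fun t x y => d_1 (d_2 psi) t x y * omega t x y + (d_2 psi t x y - y) * d_1 omega t x y).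
  assert (Z : avgz G1 t y = 0).
  { apply (avgz_eq_0_of_is_derive_1 (fun t x y => (d_2 psi t x y - y) * omega t x y)).
    - unfold G1. solve_continuous3.
    - intros. unfold G1. eapply is_derive_replace.
      + apply is_derive_Rmult; [|now apply smooth3_is_derive_1].
        apply is_derive_Rminus; [apply smooth3_is_derive_1; auto with smooth|apply is_derive_Rconst].
      + cbv beta. ring.
    - intros t' x' y'. now rewrite Hom_per, (x_periodic_d_2 psi Hps_per). }
  unfold d_vort_flux, avgz in *.
  rewrite (avg_ext _ (fun x => G1 t x y -
     (d_2 (d_1 psi) t x y * omega t x y + d_1 psi t x y * d_2 omega t x y))).
  - rewrite avg_minus, Z by (unfold G1; solve_continuous). ring.
  - intros x. unfold G1. rewrite smooth3_d_1_d_2 by exact Hps.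
    pose proof (Htransport t x y Ht Hy) as Tr. unfold ux in Tr. lra.
Qed.

Lemma avgz_d_t_omega_eq t y : 0 <= t <= T -> 0 <= y <= 1 ->
  avgz (d_t omega) t y = avgz (fun s x y => d_2 psi s x y * d_1 omega s x y) t y
     - avgz (fun s x y => d_1 psi s x y * d_2 omega s x y) t y.
Proof.
  intros Ht Hy. unfold avgz.
  rewrite (avg_ext _ (fun x => - y * d_1 omega t x y + (d_2 psi t x y * d_1 omega t x y
     - d_1 psi t x y * d_2 omega t x y))).
  - rewrite avg_plus, avg_minus, avg_scal by solve_continuous.
    pose proof (smooth3_avgz_d_1 omega t y Hom Hom_per) as Z. unfold avgz in Z. rewrite Z. ring.
  - intros x. pose proof (Htransport t x y Ht Hy) as Tr. unfold ux in Tr. lra.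
Qed.

(* By the Poisson equation,
   d_x psi omega = d_x (|d_x psi|^2 - |d_y psi|^2) / 2 + d_y (d_x psi d_y psi). *)
Lemma vort_flux_eq_d_stress t y : 0 <= t <= T -> 0 <= y <= 1 -> vort_flux t y = d_stress t y.
Proof.
  intros Ht Hy.
  set (G2 := fun t x y => d_1 psi t x y * d_1 (d_1 psi) t x y - d_2 psi t x y * d_1 (d_2 psi) t x y).
  assert (Z : avgz G2 t y = 0).
  { apply (avgz_eq_0_of_is_derive_1
      (fun t x y => / 2 * (d_1 psi t x y * d_1 psi t x y) - / 2 * (d_2 psi t x y * d_2 psi t x y))).
    - unfold G2. solve_continuous3.
    - intros. unfold G2. eapply is_derive_replace.
      + apply is_derive_Rminus; apply is_derive_scal;
          apply is_derive_Rmult; apply smooth3_is_derive_1; auto with smooth.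
      + cbv beta. field.
    - intros t' x' y'. now rewrite !(x_periodic_d_1 psi Hps Hps_per), !(x_periodic_d_2 psi Hps_per). }
  unfold vort_flux, d_stress, avgz in *.
  rewrite (avg_ext (fun x => d_1 psi t x y * omega t x y) (fun x => G2 t x y +
     (d_2 (d_1 psi) t x y * d_2 psi t x y + d_1 psi t x y * d_2 (d_2 psi) t x y))).
  - rewrite avg_plus, Z by (unfold G2; solve_continuous). ring.
  - intros x. unfold G2. rewrite smooth3_d_1_d_2 by exact Hps. rewrite <- (Hlaplace t x y Ht Hy). ring.
Qed.

Lemma vort_flux_0 t : 0 <= t <= T -> vort_flux t 0 = 0.
Proof.
  intros Ht. unfold vort_flux, avgz. rewrite (avg_ext _ (fun _ => 0)); [apply avg_const|].
  intros; rewrite (proj1 (d_1_psi_walls t x Ht)); ring.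
Qed.

Lemma RInt_vort_flux t : 0 <= t <= T -> RInt (fun y => vort_flux t y) 0 1 = 0 :> R.
Proof.
  intros Ht. rewrite (RInt_ext_R _ (fun y => d_stress t y)).
  - rewrite (RInt_is_derive (fun y => stress t y));
      [|intros; apply is_derive_stress|intros; apply continuous_d_stress].
    assert (Z : forall y, (y = 0 \/ y = 1) -> stress t y = 0).
    { intros y Hy. unfold stress, avgz. rewrite (avg_ext _ (fun _ => 0)); [apply avg_const|].
      intros x. destruct Hy as [->| ->]; [rewrite (proj1 (d_1_psi_walls t x Ht))
        |rewrite (proj2 (d_1_psi_walls t x Ht))]; ring. }
    rewrite !Z by auto. ring.
  - intros y Hy. rewrite Rmin_left, Rmax_right in Hy by lra.
    apply vort_flux_eq_d_stress; auto; lra.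
Qed.

Definition first_moment_rate (t : R) : R := RInt (fun y => (1 - y) * avgz (d_t omega) t y) 0 1.

Lemma is_derive_first_moment t : is_derive first_moment t (first_moment_rate t).
Proof.
  apply (is_derive_RInt_param_R (fun u y => (1 - y) * mean_vort u y)
           (fun u y => (1 - y) * avgz (d_t omega) u y)).
  - intros. apply is_derive_scal, smooth3_is_derive_avgz_t, Hom.
  - intros. apply continuity_2d_pt_mult.
    + apply continuity_2d_pt_minus; [apply continuity_2d_pt_const|apply continuity_2d_pt_id2].
    + apply avgz_continuity_2d_pt; auto with smooth.
  - intros. apply ex_RInt_continuous_R. intros.
    apply continuous_Rmult; [solve_continuous|apply continuous_mean_vort].
Qed.

(* Integration by parts, the boundary term vanishing because d_x psi = 0 on the wall. *)
Lemma first_moment_rate_eq_0 t : 0 <= t <= T -> first_moment_rate t = 0.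
Proof.
  intros Ht. pose proof (continuous_vort_flux t). pose proof (continuous_d_vort_flux t).
  unfold first_moment_rate.
  rewrite (RInt_ext_R _ (fun y => -1 * (- vort_flux t y + (1 - y) * d_vort_flux t y)
                                   + -1 * vort_flux t y)).
  2: { intros y Hy. rewrite Rmin_left, Rmax_right in Hy by lra.
       rewrite avgz_d_t_omega by (auto; lra). ring. }
  rewrite RInt_Rplus, !RInt_Rscal by (apply ex_RInt_continuous_R; solve_continuous).
  rewrite (RInt_is_derive (fun y => (1 - y) * vort_flux t y)); [|intros y _|solve_continuous].
  - rewrite RInt_vort_flux, vort_flux_0 by exact Ht. ring.
  - eapply is_derive_replace;
      [apply is_derive_Rmult; [apply is_derive_Rminus; [apply is_derive_Rconst|apply is_derive_Rid]
                              |apply is_derive_vort_flux]|].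
    cbv beta. ring.
Qed.

Definition c0 := mean_ux 0 0.

Lemma mean_ux_0 t : 0 <= t <= T -> mean_ux t 0 = c0.
Proof.
  intros Ht. unfold c0. rewrite !mean_ux_0_eq_first_moment by lra.
  apply eq_of_is_derive_0; [lra| |].
  - intros s Hs. rewrite <- (first_moment_rate_eq_0 s) by lra. apply is_derive_first_moment.
  - intros. eapply is_derive_continuous_R, is_derive_first_moment.
Qed.

Lemma mean_ux_near_walls t y : 0 <= t <= T -> (0 <= y <= theta0 \/ 1 - theta0 <= y <= 1) ->
  mean_ux t y = c0.
Proof.
  intros Ht Hy. rewrite <- (mean_ux_0 t Ht).
  assert (Cu : forall y, continuous (fun s => mean_ux t s) y)
    by (intros; apply continuity_2d_pt_continuous_2, continuity_2d_pt_mean_ux).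
  pose proof (continuous_mean_vort t) as Cw.
  assert (Flat : forall a b, 0 <= a -> a <= b -> b <= 1 -> (b <= theta0 \/ 1 - theta0 <= a) ->
    mean_ux t b = mean_ux t a).
  { intros a b Ha Hab Hb Hs. apply eq_of_is_derive_0; auto. intros x Hx.
    assert (x < theta0 \/ 1 - theta0 < x) by (destruct Hs; [left|right]; lra).
    eapply is_derive_replace; [apply is_derive_mean_ux|].
    rewrite mean_psi_yy_eq_mean_vort, mean_vort_near_walls by (auto; lra). ring. }
  destruct Hy as [Hy|Hy]; [apply Flat; lra || (left; lra)|].
  rewrite <- (Flat y 1) by (lra || (right; lra)).
  assert (E : RInt (fun s => -1 * mean_vort t s) 0 1 = mean_ux t 1 - mean_ux t 0 :> R).
  { apply RInt_is_derive; [|solve_continuous].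
    intros x Hx. rewrite Rmin_left, Rmax_right in Hx by lra.
    eapply is_derive_replace; [apply is_derive_mean_ux|].
    rewrite mean_psi_yy_eq_mean_vort by (auto; lra). ring. }
  rewrite RInt_Rscal, RInt_mean_vort in E by (auto; apply ex_RInt_continuous_R, Cw). lra.
Qed.

(** * The change of variables *)

Definition int_mean_ux (t y : R) : R := RInt (fun tau => mean_ux tau y) 0 t.
Definition int_mean_psi_yy (t y : R) : R := RInt (fun tau => mean_psi_yy tau y) 0 t.
Definition int_mean_psi_yyy (t y : R) : R := RInt (fun tau => mean_psi_yyy tau y) 0 t.

Lemma is_derive_int_mean_ux_t t y : is_derive (fun s => int_mean_ux s y) t (mean_ux t y).
Proof. exact (is_derive_RInt_upper mean_ux 0 continuity_2d_pt_mean_ux t y). Qed.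

Lemma is_derive_int_mean_psi_yy_t t y :
  is_derive (fun s => int_mean_psi_yy s y) t (mean_psi_yy t y).
Proof. exact (is_derive_RInt_upper mean_psi_yy 0 continuity_2d_pt_mean_psi_yy t y). Qed.

Lemma is_derive_int_mean_ux_2 t y :
  is_derive (fun s => int_mean_ux t s) y (- int_mean_psi_yy t y).
Proof.
  eapply is_derive_replace.
  - apply (is_derive_RInt_upper_param mean_ux 0 continuity_2d_pt_mean_ux
             (fun t y => - mean_psi_yy t y)).
    + intros; apply is_derive_mean_ux.
    + intros; apply continuity_2d_pt_opp, continuity_2d_pt_mean_psi_yy.
  - unfold int_mean_psi_yy.
    rewrite (RInt_ext_R _ (fun tau => -1 * mean_psi_yy tau y)) by (intros; ring).
    rewrite RInt_Rscal by apply (ex_RInt_continuity_2d_pt _ continuity_2d_pt_mean_psi_yy). ring.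
Qed.

Lemma is_derive_int_mean_psi_yy_2 t y :
  is_derive (fun s => int_mean_psi_yy t s) y (int_mean_psi_yyy t y).
Proof.
  apply (is_derive_RInt_upper_param mean_psi_yy 0 continuity_2d_pt_mean_psi_yy mean_psi_yyy).
  - intros; apply is_derive_mean_psi_yy.
  - intros; apply continuity_2d_pt_mean_psi_yyy.
Qed.

Definition vy (t y : R) : R := 1 - / t * int_mean_psi_yy t y.
Definition vt (t y : R) : R := - / (t * t) * int_mean_ux t y + / t * mean_ux t y.
Definition vyy (t y : R) : R := - / t * int_mean_psi_yyy t y.
Definition vty (t y : R) : R := / (t * t) * int_mean_psi_yy t y - / t * mean_psi_yy t y.

Lemma is_derive_vmap_2 t y : is_derive (fun s => vmap psi t s) y (vy t y).
Proof.
  apply (is_derive_ext (fun s => s + / t * int_mean_ux t s)); [reflexivity|].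
  eapply is_derive_replace;
    [apply is_derive_Rplus; [apply is_derive_Rid|apply is_derive_scal, is_derive_int_mean_ux_2]|].
  unfold vy. ring.
Qed.

Lemma is_derive_vmap_t t y : t <> 0 -> is_derive (fun s => vmap psi s y) t (vt t y).
Proof.
  intros Ht. apply (is_derive_ext (fun s => y + / s * int_mean_ux s y)); [reflexivity|].
  eapply is_derive_replace; [apply is_derive_Rplus; [apply is_derive_Rconst|
    apply is_derive_Rmult; [apply is_derive_Rinv_id, Ht|apply is_derive_int_mean_ux_t]]|].
  unfold vt. ring.
Qed.

Lemma is_derive_vy_2 t y : is_derive (fun s => vy t s) y (vyy t y).
Proof.
  eapply is_derive_replace; [apply is_derive_Rminus;
    [apply is_derive_Rconst|apply is_derive_scal, is_derive_int_mean_psi_yy_2]|].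
  unfold vyy. ring.
Qed.

Lemma is_derive_vy_t t y : t <> 0 -> is_derive (fun s => vy s y) t (vty t y).
Proof.
  intros Ht. eapply is_derive_replace; [apply is_derive_Rminus; [apply is_derive_Rconst|
    apply is_derive_Rmult; [apply is_derive_Rinv_id, Ht|apply is_derive_int_mean_psi_yy_t]]|].
  unfold vty. ring.
Qed.

Lemma is_derive_vt_2 t y : is_derive (fun s => vt t s) y (vty t y).
Proof.
  eapply is_derive_replace; [apply is_derive_Rplus; apply is_derive_scal;
    [apply is_derive_int_mean_ux_2|apply is_derive_mean_ux]|].
  unfold vty. ring.
Qed.

Lemma continuity_2d_pt_vy t y : t <> 0 -> continuity_2d_pt vy t y.
Proof.
  intros Ht. apply continuity_2d_pt_minus; [apply continuity_2d_pt_const|].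
  apply continuity_2d_pt_mult; [now apply continuity_2d_pt_Rinv_1|].
  exact (continuity_2d_pt_RInt_upper _ 0 continuity_2d_pt_mean_psi_yy t y).
Qed.

Lemma continuity_2d_pt_vt t y : t <> 0 -> continuity_2d_pt vt t y.
Proof.
  intros Ht. apply continuity_2d_pt_plus; apply continuity_2d_pt_mult.
  - apply continuity_2d_pt_opp, (continuity_2d_pt_inv (fun t _ => t * t));
      [apply continuity_2d_pt_mult; apply continuity_2d_pt_id1|now apply Rmult_integral_contrapositive].
  - exact (continuity_2d_pt_RInt_upper _ 0 continuity_2d_pt_mean_ux t y).
  - now apply continuity_2d_pt_Rinv_1.
  - apply continuity_2d_pt_mean_ux.
Qed.

Lemma continuity_2d_pt_vyy t y : t <> 0 -> continuity_2d_pt vyy t y.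
Proof.
  intros Ht. apply continuity_2d_pt_mult.
  - now apply continuity_2d_pt_opp, continuity_2d_pt_Rinv_1.
  - exact (continuity_2d_pt_RInt_upper _ 0 continuity_2d_pt_mean_psi_yyy t y).
Qed.

Lemma continuity_2d_pt_vty t y : t <> 0 -> continuity_2d_pt vty t y.
Proof.
  intros Ht. apply continuity_2d_pt_minus; apply continuity_2d_pt_mult.
  - apply (continuity_2d_pt_inv (fun t _ => t * t));
      [apply continuity_2d_pt_mult; apply continuity_2d_pt_id1|now apply Rmult_integral_contrapositive].
  - exact (continuity_2d_pt_RInt_upper _ 0 continuity_2d_pt_mean_psi_yy t y).
  - now apply continuity_2d_pt_Rinv_1.
  - apply continuity_2d_pt_mean_psi_yy.
Qed.

Lemma has_C1_partials_vmap t y : 0 < t -> has_C1_partials (vmap psi) vt vy t y.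
Proof.
  intros Ht. split; [|split; [apply continuity_2d_pt_vt|apply continuity_2d_pt_vy]; lra].
  exists (mkposreal t Ht). simpl. intros t' y' H1 _. apply Rabs_def2 in H1.
  split; [apply is_derive_vmap_t; lra|apply is_derive_vmap_2].
Qed.

Lemma has_C1_partials_vy t y : 0 < t -> has_C1_partials vy vty vyy t y.
Proof.
  intros Ht. split; [|split; [apply continuity_2d_pt_vty|apply continuity_2d_pt_vyy]; lra].
  exists (mkposreal t Ht). simpl. intros t' y' H1 _. apply Rabs_def2 in H1.
  split; [apply is_derive_vy_t; lra|apply is_derive_vy_2].
Qed.

Lemma Rabs_int_mean_psi_yy_le t y : 0 <= t <= T -> 0 <= y <= 1 ->
  Rabs (int_mean_psi_yy t y) <= t * / 2.
Proof.
  intros Ht Hy. unfold int_mean_psi_yy. replace (t * / 2) with ((t - 0) * / 2) by ring.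
  apply abs_RInt_le_const; [lra|apply (ex_RInt_continuity_2d_pt _ continuity_2d_pt_mean_psi_yy)|].
  intros. rewrite mean_psi_yy_eq_mean_vort by (auto; lra). apply Rabs_mean_vort_le; auto; lra.
Qed.

Lemma vy_ge t y : 0 < t <= T -> 0 <= y <= 1 -> / 2 <= vy t y.
Proof.
  intros Ht Hy. unfold vy.
  pose proof (Rabs_int_mean_psi_yy_le t y ltac:(lra) Hy). pose proof (Rle_abs (int_mean_psi_yy t y)).
  assert (/ t * int_mean_psi_yy t y <= / t * (t * / 2))
    by (apply Rmult_le_compat_l; [left; apply Rinv_0_lt_compat|]; lra).
  replace (/ t * (t * / 2)) with (/ 2) in * by (field; lra). lra.
Qed.

Lemma Rabs_mean_ux_le t y : 0 <= t <= T -> 0 <= y <= 1 -> Rabs (mean_ux t y) <= Rabs c0 + / 2.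
Proof.
  intros Ht Hy. destruct (mvt_between (fun s => mean_ux t s) (fun s => - mean_psi_yy t s) 0 y)
    as [c [_ [Hc E]]]; [intros; apply is_derive_mean_ux|].
  rewrite Rmin_left, Rmax_right in Hc by lra.
  rewrite mean_ux_0, mean_psi_yy_eq_mean_vort in E by (auto; lra).
  pose proof (Rabs_mean_vort_le t c Ht ltac:(lra)).
  replace (mean_ux t y) with (c0 + (- mean_vort t c * (y - 0))) by lra.
  eapply Rle_trans; [apply Rabs_triang|]. apply Rplus_le_compat_l.
  rewrite Rabs_mult, Rabs_Ropp, (Rabs_right (y - 0)) by lra.
  apply Rle_trans with (/ 2 * 1); [apply Rmult_le_compat; try lra; apply Rabs_pos|lra].
Qed.

Lemma Rabs_vt_le t y : 0 < t <= T -> 0 <= y <= 1 -> Rabs (vt t y) <= 2 * (Rabs c0 + / 2) / t.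
Proof.
  intros Ht Hy. unfold vt.
  assert (HI : Rabs (int_mean_ux t y) <= t * (Rabs c0 + / 2)).
  { unfold int_mean_ux. replace (t * (Rabs c0 + / 2)) with ((t - 0) * (Rabs c0 + / 2)) by ring.
    apply abs_RInt_le_const; [lra|apply (ex_RInt_continuity_2d_pt _ continuity_2d_pt_mean_ux)|].
    intros. apply Rabs_mean_ux_le; auto; lra. }
  pose proof (Rabs_mean_ux_le t y ltac:(lra) Hy) as HA.
  eapply Rle_trans; [apply Rabs_triang|]. rewrite !Rabs_mult, Rabs_Ropp.
  rewrite (Rabs_right (/ (t * t))) by (left; apply Rinv_0_lt_compat; nra).
  rewrite (Rabs_right (/ t)) by (left; apply Rinv_0_lt_compat; lra).
  apply Rle_trans with (/ (t * t) * (t * (Rabs c0 + / 2)) + / t * (Rabs c0 + / 2)).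
  - apply Rplus_le_compat; apply Rmult_le_compat_l; auto; left; apply Rinv_0_lt_compat; nra.
  - right. field. lra.
Qed.

Lemma vmap_near_walls t y : 0 < t <= T -> (0 <= y <= theta0 \/ 1 - theta0 <= y <= 1) ->
  vmap psi t y = y + c0.
Proof.
  intros Ht Hy. change (y + / t * int_mean_ux t y = y + c0). unfold int_mean_ux.
  rewrite (RInt_ext_R _ (fun _ => c0)), RInt_Rconst; [field; lra|].
  intros x Hx. rewrite Rmin_left, Rmax_right in Hx by lra. apply mean_ux_near_walls; auto; lra.
Qed.

Lemma vmap_0 t : 0 < t <= T -> vmap psi t 0 = c0.
Proof. intros. rewrite vmap_near_walls; auto; lra. Qed.

Lemma vmap_1 t : 0 < t <= T -> vmap psi t 1 = 1 + c0.
Proof. intros. rewrite vmap_near_walls; auto; lra. Qed.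

Lemma vmap_increasing t y1 y2 : 0 < t <= T -> 0 <= y1 -> y1 <= y2 -> y2 <= 1 ->
  (y2 - y1) * / 2 <= vmap psi t y2 - vmap psi t y1.
Proof.
  intros Ht H1 H2 H3.
  destruct (mvt_between (fun s => vmap psi t s) (vy t) y1 y2) as [c [_ [Hc E]]];
    [intros; apply is_derive_vmap_2|].
  rewrite Rmin_left, Rmax_right in Hc by lra. rewrite E.
  pose proof (vy_ge t c Ht ltac:(lra)). nra.
Qed.

Lemma Rabs_sub_le_vmap t y1 y2 : 0 < t <= T -> 0 <= y1 <= 1 -> 0 <= y2 <= 1 ->
  Rabs (y2 - y1) <= 2 * Rabs (vmap psi t y2 - vmap psi t y1).
Proof.
  intros Ht H1 H2. destruct (Rle_dec y1 y2).
  - pose proof (vmap_increasing t y1 y2 Ht ltac:(lra) r ltac:(lra)).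
    rewrite !Rabs_right by lra. lra.
  - pose proof (vmap_increasing t y2 y1 Ht ltac:(lra) ltac:(lra) ltac:(lra)).
    rewrite !Rabs_left1 by lra. lra.
Qed.

Lemma vmap_range t y : 0 < t <= T -> 0 <= y <= 1 -> c0 <= vmap psi t y <= c0 + 1.
Proof.
  intros Ht Hy. pose proof (vmap_increasing t 0 y Ht ltac:(lra) ltac:(lra) ltac:(lra)).
  pose proof (vmap_increasing t y 1 Ht ltac:(lra) ltac:(lra) ltac:(lra)).
  rewrite vmap_0, vmap_1 in * by auto. lra.
Qed.

(* Meaningful only for w in [c0, c0 + 1], see vinv_spec. *)
Definition vinv (t w : R) : R := epsilon (inhabits 0) (fun y => 0 <= y <= 1 /\ vmap psi t y = w).

Lemma vinv_spec t w : 0 < t <= T -> c0 <= w <= c0 + 1 ->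
  0 <= vinv t w <= 1 /\ vmap psi t (vinv t w) = w.
Proof.
  intros Ht Hw. unfold vinv. apply epsilon_spec.
  destruct (IVT_gen (fun s => vmap psi t s) 0 1 w) as [y [Hy E]].
  - intros x. apply continuity_pt_filterlim, (is_derive_continuous_R _ _ _ (is_derive_vmap_2 t x)).
  - rewrite vmap_0, vmap_1, Rmin_left, Rmax_right by (auto; lra). lra.
  - exists y. rewrite Rmin_left, Rmax_right in Hy by lra. auto.
Qed.

Lemma vinv_unique t w y : 0 < t <= T -> c0 <= w <= c0 + 1 -> 0 <= y <= 1 ->
  vmap psi t y = w -> y = vinv t w.
Proof.
  intros Ht Hw Hy E. destruct (vinv_spec t w Ht Hw) as [H1 H2].
  pose proof (Rabs_sub_le_vmap t y (vinv t w) Ht Hy H1) as L. rewrite E, H2, Rminus_diag, Rabs_R0 in L.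
  assert (Z : Rabs (vinv t w - y) = 0) by (pose proof (Rabs_pos (vinv t w - y)); lra).
  apply Rabs_eq_0 in Z. lra.
Qed.

Lemma vinv_lipschitz_2 t w : 0 < t <= T -> c0 < w < c0 + 1 ->
  exists L d, 0 < d /\ forall w', Rabs (w' - w) < d -> Rabs (vinv t w' - vinv t w) <= L * Rabs (w' - w).
Proof.
  intros Ht Hw. destruct (ball_in_open_interval c0 (c0 + 1) w Hw) as [d [Hd Hn]].
  exists 2, d. split; [exact Hd|]. intros w' Hw'. specialize (Hn w' Hw').
  destruct (vinv_spec t w Ht ltac:(lra)) as [H1 E1]. destruct (vinv_spec t w' Ht ltac:(lra)) as [H2 E2].
  rewrite <- E1, <- E2 at 2. apply Rabs_sub_le_vmap; auto.
Qed.

Lemma vinv_lipschitz_t t w : 0 < t < T -> c0 <= w <= c0 + 1 ->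
  exists L d, 0 < d /\ forall s, Rabs (s - t) < d -> Rabs (vinv s w - vinv t w) <= L * Rabs (s - t).
Proof.
  intros Ht Hw. destruct (ball_in_open_interval (t / 2) T t ltac:(lra)) as [d [Hd Hn]].
  set (K := Rabs c0 + / 2). assert (HK : 0 < K) by (unfold K; pose proof (Rabs_pos c0); lra).
  exists (2 * (4 * K / t)), d. split; [exact Hd|]. intros s Hs.
  destruct (vinv_spec s w ltac:(specialize (Hn s Hs); lra) Hw) as [Hy1 E1].
  destruct (vinv_spec t w ltac:(lra) Hw) as [Hy0 E0].
  set (y1 := vinv s w) in *. set (y0 := vinv t w) in *.
  destruct (mvt_between (fun r => vmap psi r y1) (fun r => vt r y1) t s) as [xi [Hxi [_ E]]].
  { intros r Hr. apply is_derive_vmap_t. specialize (Hn r ltac:(lra)). lra. }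
  specialize (Hn xi ltac:(lra)).
  assert (Bxi : Rabs (vt xi y1) <= 4 * K / t).
  { eapply Rle_trans; [apply Rabs_vt_le; lra|]. fold K.
    replace (4 * K / t) with (2 * K / (t / 2)) by (field; lra). unfold Rdiv.
    apply Rmult_le_compat_l; [lra|apply Rinv_le_contravar; lra]. }
  eapply Rle_trans; [apply (Rabs_sub_le_vmap t y0 y1); lra|].
  replace (vmap psi t y1 - vmap psi t y0) with (- (vt xi y1 * (s - t))) by (simpl in E; lra).
  rewrite Rabs_Ropp, Rabs_mult. pose proof (Rabs_pos (s - t)). nra.
Qed.

Lemma is_derive_vinv_2 t w : 0 < t <= T -> c0 < w < c0 + 1 ->
  is_derive (fun s => vinv t s) w (/ vy t (vinv t w)).
Proof.
  intros Ht Hw. destruct (vinv_spec t w Ht ltac:(lra)) as [Hy _].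
  pose proof (vy_ge t _ Ht Hy).
  eapply is_derive_replace.
  - apply (is_derive_implicit (fun _ y => vmap psi t y) (fun _ _ => 0) (fun _ y => vy t y)
             (fun s => vinv t s) (fun s => s) w 1).
    + split; [|split;
        [apply continuity_2d_pt_const|apply continuity_2d_pt_fix_1, continuity_2d_pt_vy; lra]].
      exists (mkposreal 1 Rlt_0_1). intros. split; [apply is_derive_Rconst|apply is_derive_vmap_2].
    + lra.
    + now apply vinv_lipschitz_2.
    + destruct (ball_in_open_interval c0 (c0 + 1) w Hw) as [d [Hd Hn]].
      exists d. split; [exact Hd|]. intros s Hs. specialize (Hn s Hs). apply vinv_spec; lra.
    + apply is_derive_Rid.
  - field. lra.
Qed.

Lemma is_derive_vinv_t t w : 0 < t < T -> c0 <= w <= c0 + 1 ->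
  is_derive (fun s => vinv s w) t (- vt t (vinv t w) / vy t (vinv t w)).
Proof.
  intros Ht Hw. destruct (vinv_spec t w ltac:(lra) Hw) as [Hy _].
  pose proof (vy_ge t _ ltac:(lra) Hy).
  eapply is_derive_replace.
  - apply (is_derive_implicit (vmap psi) vt vy (fun s => vinv s w) (fun _ => w) t 0).
    + apply has_C1_partials_vmap; lra.
    + lra.
    + now apply vinv_lipschitz_t.
    + destruct (ball_in_open_interval 0 T t Ht) as [d [Hd Hn]].
      exists d. split; [exact Hd|]. intros s Hs. specialize (Hn s Hs). apply vinv_spec; lra.
    + apply is_derive_Rconst.
  - field. lra.
Qed.

Lemma vty_eq t y : 0 < t <= T -> 0 <= y <= 1 -> t * vty t y = 1 - vy t y - mean_vort t y.
Proof. intros. unfold vty, vy. rewrite <- mean_psi_yy_eq_mean_vort by (auto; lra). field. lra. Qed.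

Lemma vt_near_walls t y : 0 < t <= T -> (0 <= y <= theta0 \/ 1 - theta0 <= y <= 1) -> vt t y = 0.
Proof.
  intros Ht Hy. unfold vt, int_mean_ux.
  rewrite mean_ux_near_walls by (auto; lra).
  rewrite (RInt_ext_R _ (fun _ => c0)), RInt_Rconst; [field; lra|].
  intros x Hx. rewrite Rmin_left, Rmax_right in Hx by lra. apply mean_ux_near_walls; auto; lra.
Qed.

(** * The equations in the new variables *)

Definition pullback (G : R -> R -> R -> R) (t z v : R) : R := G t (z + t * v) (vinv t v).

Lemma is_derive_pullback_z G t z v : smooth3 G ->
  is_derive (fun a => pullback G t a v) z (d_1 G t (z + t * v) (vinv t v)).
Proof. intros H. unfold pullback. apply smooth3_is_derive_1_shift, H. Qed.

Lemma is_derive_pullback_v G t z v : smooth3 G -> 0 < t <= T -> c0 < v < c0 + 1 ->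
  is_derive (fun r => pullback G t z r) v
    (d_1 G t (z + t * v) (vinv t v) * t + d_2 G t (z + t * v) (vinv t v) * / vy t (vinv t v)).
Proof.
  intros HG Ht Hv. eapply is_derive_replace.
  - apply (is_derive_comp3 G (d_t G) (d_1 G) (d_2 G)
             (fun _ => t) (fun r => z + t * r) (fun r => vinv t r)).
    + apply smooth3_has_C1_partials3, HG.
    + apply is_derive_Rconst.
    + apply is_derive_affine.
    + now apply is_derive_vinv_2.
  - ring.
Qed.

Lemma is_derive_pullback_t G t z v : smooth3 G -> 0 < t < T -> c0 <= v <= c0 + 1 ->
  is_derive (fun s => pullback G s z v) t
    (d_t G t (z + t * v) (vinv t v) + d_1 G t (z + t * v) (vinv t v) * v
     + d_2 G t (z + t * v) (vinv t v) * (- vt t (vinv t v) / vy t (vinv t v))).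
Proof.
  intros HG Ht Hv. eapply is_derive_replace.
  - apply (is_derive_comp3 G (d_t G) (d_1 G) (d_2 G)
             (fun s => s) (fun s => z + s * v) (fun s => vinv s v)).
    + apply smooth3_has_C1_partials3, HG.
    + apply is_derive_Rid.
    + apply (is_derive_ext (fun s => z + v * s));
        [intros; now rewrite Rmult_comm|apply is_derive_affine].
    + now apply is_derive_vinv_t.
  - ring.
Qed.

Section Pulled_back.
Variables F G : R -> R -> R -> R.
Hypothesis HG : smooth3 G.
Hypothesis HF : forall t z w, 0 < t <= T -> c0 <= w <= c0 + 1 -> F t z w = pullback G t z w.

Lemma pulled_back_d_t t z w : 0 < t < T -> c0 <= w <= c0 + 1 ->
  d_t F t z w = d_t G t (z + t * w) (vinv t w) + d_1 G t (z + t * w) (vinv t w) * w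
     + d_2 G t (z + t * w) (vinv t w) * (- vt t (vinv t w) / vy t (vinv t w)).
Proof.
  intros Ht Hw. unfold d_t at 1. apply is_derive_unique.
  destruct (ball_in_open_interval 0 T t Ht) as [d [Hd Hn]].
  apply (is_derive_ext_ball (fun s => pullback G s z w) _ _ _ d Hd).
  - intros s Hs. specialize (Hn s Hs). symmetry. apply HF; lra.
  - now apply is_derive_pullback_t.
Qed.

Lemma pulled_back_d_1 t z w : 0 < t <= T -> c0 <= w <= c0 + 1 ->
  d_1 F t z w = d_1 G t (z + t * w) (vinv t w).
Proof.
  intros Ht Hw. unfold d_1 at 1. rewrite (Derive_ext _ (fun a => pullback G t a w)) by auto.
  now apply is_derive_unique, is_derive_pullback_z.
Qed.

Lemma is_derive_pulled_back_2 t z w : 0 < t <= T -> c0 < w < c0 + 1 ->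
  is_derive (fun r => F t z r) w
    (d_1 G t (z + t * w) (vinv t w) * t + d_2 G t (z + t * w) (vinv t w) * / vy t (vinv t w)).
Proof.
  intros Ht Hw. destruct (ball_in_open_interval c0 (c0 + 1) w Hw) as [d [Hd Hn]].
  apply (is_derive_ext_ball (fun r => pullback G t z r) _ _ _ d Hd).
  - intros r Hr. specialize (Hn r Hr). symmetry. apply HF; lra.
  - now apply is_derive_pullback_v.
Qed.

Lemma pulled_back_d_2 t z w : 0 < t <= T -> c0 < w < c0 + 1 ->
  d_2 F t z w =
    d_1 G t (z + t * w) (vinv t w) * t + d_2 G t (z + t * w) (vinv t w) * / vy t (vinv t w).
Proof. intros. now apply is_derive_unique, is_derive_pulled_back_2. Qed.

Lemma avgz_pulled_back t w : x_periodic G -> 0 < t <= T -> c0 <= w <= c0 + 1 ->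
  avgz F t w = avgz G t (vinv t w).
Proof.
  intros Hper Ht Hw. unfold avgz. rewrite (avg_ext _ (fun z => G t (z + t * w) (vinv t w))) by auto.
  apply (avg_shift (fun x => G t x (vinv t w))); [intros; apply smooth3_continuous_1, HG|].
  intros; apply Hper.
Qed.
End Pulled_back.

Definition calH (V1 Vd : R -> R -> R) (t w : R) : R := t * V1 t w * dw2 Vd t w.

Section New_unknowns.
Variables (f phi : R -> R -> R -> R) (V1 V2 Vd : R -> R -> R).
Hypothesis Hdef : forall t x y, 0 < t <= T -> 0 <= y <= 1 ->
  f t (x - t * vmap psi t y) (vmap psi t y) = omega t x y /\
  phi t (x - t * vmap psi t y) (vmap psi t y) = psi t x y /\
  V1 t (vmap psi t y) = Derive (fun s => vmap psi t s) y /\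
  V2 t (vmap psi t y) = Derive (fun s => Derive (fun r => vmap psi t r) s) y /\
  Vd t (vmap psi t y) = Derive (fun s => vmap psi s y) t.

Lemma new_unknowns_eq t z w : 0 < t <= T -> c0 <= w <= c0 + 1 ->
  f t z w = pullback omega t z w /\ phi t z w = pullback psi t z w /\
  V1 t w = vy t (vinv t w) /\ V2 t w = vyy t (vinv t w) /\ Vd t w = vt t (vinv t w).
Proof.
  intros Ht Hw. destruct (vinv_spec t w Ht Hw) as [Hy E].
  destruct (Hdef t (z + t * w) (vinv t w) Ht Hy) as [H1 [H2 [H3 [H4 H5]]]].
  rewrite E in H1, H2, H3, H4, H5. replace (z + t * w - t * w) with z in H1, H2 by ring.
  repeat split; auto.
  - rewrite H3. apply is_derive_unique, is_derive_vmap_2.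
  - rewrite H4, (Derive_ext _ (fun s => vy t s)) by (intros; apply is_derive_unique, is_derive_vmap_2).
    apply is_derive_unique, is_derive_vy_2.
  - rewrite H5. apply is_derive_unique, is_derive_vmap_t. lra.
Qed.

Lemma f_pullback t z w : 0 < t <= T -> c0 <= w <= c0 + 1 -> f t z w = pullback omega t z w.
Proof. intros. apply new_unknowns_eq; auto. Qed.

Lemma phi_pullback t z w : 0 < t <= T -> c0 <= w <= c0 + 1 -> phi t z w = pullback psi t z w.
Proof. intros. apply new_unknowns_eq; auto. Qed.

Lemma V1_eq t w : 0 < t <= T -> c0 <= w <= c0 + 1 -> V1 t w = vy t (vinv t w).
Proof. intros. apply (new_unknowns_eq t 0 w); auto. Qed.

Lemma V2_eq t w : 0 < t <= T -> c0 <= w <= c0 + 1 -> V2 t w = vyy t (vinv t w).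
Proof. intros. apply (new_unknowns_eq t 0 w); auto. Qed.

Lemma Vd_eq t w : 0 < t <= T -> c0 <= w <= c0 + 1 -> Vd t w = vt t (vinv t w).
Proof. intros. apply (new_unknowns_eq t 0 w); auto. Qed.

Lemma avgz_f t w : 0 < t <= T -> c0 <= w <= c0 + 1 -> avgz f t w = mean_vort t (vinv t w).
Proof. intros. now apply (avgz_pulled_back f omega Hom f_pullback). Qed.

Lemma avgz_phi t w : 0 < t <= T -> c0 <= w <= c0 + 1 -> avgz phi t w = mean_psi t (vinv t w).
Proof. intros. now apply (avgz_pulled_back phi psi Hps phi_pullback). Qed.

Lemma is_derive_V1_2 t w : 0 < t <= T -> c0 < w < c0 + 1 ->
  is_derive (fun r => V1 t r) w (vyy t (vinv t w) * / vy t (vinv t w)).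
Proof.
  intros Ht Hw. destruct (ball_in_open_interval c0 (c0 + 1) w Hw) as [d [Hd Hn]].
  apply (is_derive_ext_ball (fun r => vy t (vinv t r)) _ _ _ d Hd).
  - intros r Hr. specialize (Hn r Hr). symmetry. apply V1_eq; lra.
  - apply is_derive_Rcomp; [apply is_derive_vy_2|now apply is_derive_vinv_2].
Qed.

Lemma is_derive_Vd_2 t w : 0 < t <= T -> c0 < w < c0 + 1 ->
  is_derive (fun r => Vd t r) w (vty t (vinv t w) * / vy t (vinv t w)).
Proof.
  intros Ht Hw. destruct (ball_in_open_interval c0 (c0 + 1) w Hw) as [d [Hd Hn]].
  apply (is_derive_ext_ball (fun r => vt t (vinv t r)) _ _ _ d Hd).
  - intros r Hr. specialize (Hn r Hr). symmetry. apply Vd_eq; lra.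
  - apply is_derive_Rcomp; [apply is_derive_vt_2|now apply is_derive_vinv_2].
Qed.

Lemma calH_eq t w : 0 < t <= T -> c0 < w < c0 + 1 ->
  calH V1 Vd t w = 1 - vy t (vinv t w) - mean_vort t (vinv t w).
Proof.
  intros Ht Hw. destruct (vinv_spec t w Ht ltac:(lra)) as [Hy _]. pose proof (vy_ge t _ Ht Hy).
  assert (D : dw2 Vd t w = vty t (vinv t w) * / vy t (vinv t w))
    by (apply is_derive_unique, is_derive_Vd_2; auto).
  unfold calH. rewrite D, V1_eq by lra.
  rewrite <- vty_eq by auto. field. lra.
Qed.

Lemma calH_eq_1_minus_V1_avgz_f t w : 0 < t <= T -> c0 < w < c0 + 1 ->
  calH V1 Vd t w = 1 - V1 t w - avgz f t w.
Proof. intros. rewrite calH_eq, V1_eq, avgz_f by lra. ring. Qed.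

Lemma vinv_near_walls t w : 0 < t <= T -> c0 <= w <= c0 + 1 ->
  (w < c0 + theta0 \/ c0 + 1 - theta0 < w) -> vinv t w = w - c0.
Proof.
  intros Ht Hw Hs. symmetry. apply vinv_unique; auto; [lra|].
  rewrite vmap_near_walls; [ring|auto|destruct Hs; [left|right]; lra].
Qed.

Lemma f_V1_near_walls t z w : 0 < t <= T -> c0 <= w <= c0 + 1 ->
  (w < c0 + theta0 \/ c0 + 1 - theta0 < w) -> f t z w = 0 /\ V1 t w - 1 = 0.
Proof.
  intros Ht Hw Hs. rewrite f_pullback, V1_eq by auto. unfold pullback.
  rewrite vinv_near_walls by auto. split.
  - apply Hsupp; lra.
  - unfold vy, int_mean_psi_yy. rewrite (RInt_ext_R _ (fun _ => 0)), RInt_Rconst; [ring|].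
    intros x Hx. rewrite Rmin_left, Rmax_right in Hx by lra.
    rewrite mean_psi_yy_eq_mean_vort by lra. apply mean_vort_near_walls; lra.
Qed.

Lemma calH_near_walls t w : 0 < t <= T -> c0 < w < c0 + 1 ->
  (w < c0 + theta0 \/ c0 + 1 - theta0 < w) -> calH V1 Vd t w = 0.
Proof.
  intros Ht Hw Hs. rewrite calH_eq, vinv_near_walls, mean_vort_near_walls by (auto; lra).
  destruct (f_V1_near_walls t 0 w Ht ltac:(lra) Hs) as [_ HV].
  rewrite V1_eq, vinv_near_walls in HV by (auto; lra). lra.
Qed.

Lemma Vd_walls t : 0 < t <= T -> Vd t c0 = 0 /\ Vd t (1 + c0) = 0.
Proof.
  intros Ht. rewrite !Vd_eq by lra.
  rewrite <- (vinv_unique t c0 0), <- (vinv_unique t (1 + c0) 1) by (auto using vmap_0, vmap_1; lra).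
  split; apply vt_near_walls; lra.
Qed.

Lemma d_2_Pne0_phi t z w : 0 < t <= T -> c0 < w < c0 + 1 ->
  d_2 (Pne0 phi) t z w = d_1 psi t (z + t * w) (vinv t w) * t
     + (d_2 psi t (z + t * w) (vinv t w) - mean_psi_y t (vinv t w)) * / vy t (vinv t w).
Proof.
  intros Ht Hw. unfold d_2 at 1, Pne0. apply is_derive_unique.
  destruct (ball_in_open_interval c0 (c0 + 1) w Hw) as [d [Hd Hn]].
  apply (is_derive_ext_ball (fun r => phi t z r - mean_psi t (vinv t r)) _ _ _ d Hd).
  - intros r Hr. specialize (Hn r Hr). rewrite avgz_phi by (auto; lra). reflexivity.
  - eapply is_derive_replace; [apply is_derive_Rminus;
      [apply (is_derive_pulled_back_2 phi psi Hps phi_pullback); auto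
      |apply is_derive_Rcomp; [apply is_derive_mean_psi|now apply is_derive_vinv_2]]|].
    ring.
Qed.

(* The transport equation at (x, y) = (z + t w, vinv t w), using w = y + (1/t) int_0^t <u^x>. *)
Lemma f_evolution t z w : 0 < t < T -> c0 < w < c0 + 1 ->
  d_t f t z w = V1 t w * d_2 (Pne0 phi) t z w * d_1 f t z w
    - (Vd t w + V1 t w * d_1 phi t z w) * d_2 f t z w.
Proof.
  intros Ht Hw.
  rewrite (pulled_back_d_t f omega Hom f_pullback), d_2_Pne0_phi,
    (pulled_back_d_1 f omega Hom f_pullback), (pulled_back_d_1 phi psi Hps phi_pullback),
    (pulled_back_d_2 f omega Hom f_pullback), V1_eq, Vd_eq by lra.
  destruct (vinv_spec t w ltac:(lra) ltac:(lra)) as [Hy Ev].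
  pose proof (vy_ge t _ ltac:(lra) Hy).
  pose proof (Htransport t (z + t * w) (vinv t w) ltac:(lra) Hy) as Tr. unfold ux in Tr.
  set (Y := vinv t w) in *. set (X := z + t * w) in *.
  change (Y + / t * int_mean_ux t Y = w) in Ev.
  replace (d_t omega t X Y) with (- Y * d_1 omega t X Y + d_2 psi t X Y * d_1 omega t X Y
     - d_1 psi t X Y * d_2 omega t X Y) by lra.
  rewrite <- Ev. unfold vt. rewrite mean_ux_eq. field. lra.
Qed.

Lemma V1_evolution t w : 0 < t < T -> c0 < w < c0 + 1 ->
  dt2 (fun s r => V1 s r - 1) t w = calH V1 Vd t w / t - Vd t w * dw2 (fun s r => V1 s r - 1) t w.
Proof.
  intros Ht Hw. destruct (vinv_spec t w ltac:(lra) ltac:(lra)) as [Hy _].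
  pose proof (vy_ge t _ ltac:(lra) Hy).
  assert (Dt : dt2 (fun s r => V1 s r - 1) t w
               = vty t (vinv t w) * 1 + vyy t (vinv t w) * (- vt t (vinv t w) / vy t (vinv t w)) - 0).
  { unfold dt2. apply is_derive_unique. destruct (ball_in_open_interval 0 T t Ht) as [d [Hd Hn]].
    apply (is_derive_ext_ball (fun s => vy s (vinv s w) - 1) _ _ _ d Hd).
    - intros s Hs. specialize (Hn s Hs). rewrite V1_eq by lra. reflexivity.
    - apply is_derive_Rminus; [|apply is_derive_Rconst].
      apply (is_derive_comp2 vy vty vyy (fun s => s) (fun s => vinv s w));
        [apply has_C1_partials_vy; lra|apply is_derive_Rid|apply is_derive_vinv_t; lra]. }
  assert (Dw : dw2 (fun s r => V1 s r - 1) t w = vyy t (vinv t w) * / vy t (vinv t w) - 0).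
  { unfold dw2. apply is_derive_unique, is_derive_Rminus;
      [apply is_derive_V1_2; lra|apply is_derive_Rconst]. }
  rewrite Dt, Dw, calH_eq, Vd_eq by lra. rewrite <- vty_eq by lra. field. lra.
Qed.

Lemma d_2_Vd_eq t w : 0 < t <= T -> c0 < w < c0 + 1 -> dw2 Vd t w = calH V1 Vd t w / (t * V1 t w).
Proof.
  intros Ht Hw. destruct (vinv_spec t w Ht ltac:(lra)) as [Hy _]. pose proof (vy_ge t _ Ht Hy).
  unfold calH. rewrite V1_eq by lra. field. lra.
Qed.

Lemma V2_eq_V1_d_2_V1 t w : 0 < t <= T -> c0 < w < c0 + 1 -> V2 t w = V1 t w * dw2 V1 t w.
Proof.
  intros Ht Hw. destruct (vinv_spec t w Ht ltac:(lra)) as [Hy _]. pose proof (vy_ge t _ Ht Hy).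
  assert (D : dw2 V1 t w = vyy t (vinv t w) * / vy t (vinv t w))
    by (apply is_derive_unique, is_derive_V1_2; auto).
  rewrite D, V1_eq, V2_eq by lra.
  field. lra.
Qed.

(* In the new variables, d_v - t d_z phi is the pullback of d_y psi divided by V'. *)
Lemma elliptic_eq t z w : 0 < t <= T -> c0 < w < c0 + 1 ->
  let L := fun s a b => d_2 phi s a b - t * d_1 phi s a b in
  d_1 (d_1 phi) t z w + (V1 t w) ^ 2 * (d_2 L t z w - t * d_1 L t z w) + V2 t w * L t z w
  = f t z w.
Proof.
  intros Ht Hw L.
  destruct (vinv_spec t w Ht ltac:(lra)) as [Hy _]. pose proof (vy_ge t _ Ht Hy).
  assert (EL : forall a r, c0 < r < c0 + 1 -> L t a r = pullback (d_2 psi) t a r * / vy t (vinv t r)).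
  { intros a r Hr. unfold L, pullback.
    rewrite (pulled_back_d_2 phi psi Hps phi_pullback), (pulled_back_d_1 phi psi Hps phi_pullback)
      by (auto; lra). ring. }
  assert (E11 : d_1 (d_1 phi) t z w = d_1 (d_1 psi) t (z + t * w) (vinv t w)).
  { unfold d_1 at 1. rewrite (Derive_ext _ (fun a => pullback (d_1 psi) t a w))
      by (intros; apply (pulled_back_d_1 phi psi Hps phi_pullback); auto; lra).
    apply is_derive_unique, is_derive_pullback_z; auto with smooth. }
  assert (E1L : d_1 L t z w = d_1 (d_2 psi) t (z + t * w) (vinv t w) * / vy t (vinv t w)).
  { unfold d_1 at 1. rewrite (Derive_ext _ (fun a => / vy t (vinv t w) * pullback (d_2 psi) t a w))
      by (intros; rewrite EL by exact Hw; ring).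
    apply is_derive_unique. eapply is_derive_replace;
      [apply is_derive_scal, is_derive_pullback_z; auto with smooth|]. ring. }
  assert (E2L : d_2 L t z w =
      (d_1 (d_2 psi) t (z + t * w) (vinv t w) * t
       + d_2 (d_2 psi) t (z + t * w) (vinv t w) * / vy t (vinv t w)) * / vy t (vinv t w)
      + d_2 psi t (z + t * w) (vinv t w)
        * (- (vyy t (vinv t w) * / vy t (vinv t w)) / vy t (vinv t w) ^ 2)).
  { unfold d_2 at 1. apply is_derive_unique.
    destruct (ball_in_open_interval c0 (c0 + 1) w Hw) as [d [Hd Hn]].
    apply (is_derive_ext_ball (fun r => pullback (d_2 psi) t z r * / vy t (vinv t r)) _ _ _ d Hd).
    - intros r Hr. symmetry. apply EL, Hn, Hr.
    - eapply is_derive_replace.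
      + apply is_derive_Rmult; [apply is_derive_pullback_v; auto with smooth|].
        apply (is_derive_inv (fun r => vy t (vinv t r))); [|lra].
        apply is_derive_Rcomp; [apply is_derive_vy_2|now apply is_derive_vinv_2].
      + unfold pullback. ring. }
  rewrite E11, E1L, E2L, EL, V1_eq, V2_eq, f_pullback by lra. unfold pullback.
  rewrite <- (Hlaplace t (z + t * w) (vinv t w)) by (auto; lra).
  field. lra.
Qed.

Lemma avgz_d_2_Pne0_phi_d_1_f t w : 0 < t <= T -> c0 < w < c0 + 1 ->
  avgz (fun s z r => d_2 (Pne0 phi) s z r * d_1 f s z r) t w =
  t * avgz (fun s x y => d_1 psi s x y * d_1 omega s x y) t (vinv t w)
  + / vy t (vinv t w) * avgz (fun s x y => d_2 psi s x y * d_1 omega s x y) t (vinv t w).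
Proof.
  intros Ht Hw. unfold avgz.
  set (Y := vinv t w). set (g := / vy t Y). set (a := mean_psi_y t Y).
  set (G := fun x => (d_1 psi t x Y * t + (d_2 psi t x Y - a) * g) * d_1 omega t x Y).
  rewrite (avg_ext _ (fun z => G (z + t * w))).
  2: { intros z. unfold G.
       rewrite d_2_Pne0_phi, (pulled_back_d_1 f omega Hom f_pullback) by (auto; lra).
       reflexivity. }
  rewrite avg_shift; [|unfold G; solve_continuous|].
  2: { intros x. unfold G. now rewrite (x_periodic_d_1 psi Hps Hps_per), (x_periodic_d_2 psi Hps_per),
       (x_periodic_d_1 omega Hom Hom_per). }
  rewrite (avg_ext _ (fun x => t * (d_1 psi t x Y * d_1 omega t x Y) +
     (g * (d_2 psi t x Y * d_1 omega t x Y) - (a * g) * d_1 omega t x Y))) by (intros; unfold G; ring).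
  rewrite avg_plus, avg_minus, !avg_scal by solve_continuous.
  pose proof (smooth3_avgz_d_1 omega t Y Hom Hom_per) as Z. unfold avgz in Z. rewrite Z. ring.
Qed.

Lemma avgz_d_1_phi_d_2_f t w : 0 < t <= T -> c0 < w < c0 + 1 ->
  avgz (fun s z r => d_1 phi s z r * d_2 f s z r) t w =
  t * avgz (fun s x y => d_1 psi s x y * d_1 omega s x y) t (vinv t w)
  + / vy t (vinv t w) * avgz (fun s x y => d_1 psi s x y * d_2 omega s x y) t (vinv t w).
Proof.
  intros Ht Hw. unfold avgz.
  set (Y := vinv t w). set (g := / vy t Y).
  set (G := fun x => d_1 psi t x Y * (d_1 omega t x Y * t + d_2 omega t x Y * g)).
  rewrite (avg_ext _ (fun z => G (z + t * w))).
  2: { intros z. unfold G. rewrite (pulled_back_d_1 phi psi Hps phi_pullback),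
       (pulled_back_d_2 f omega Hom f_pullback) by (auto; lra). reflexivity. }
  rewrite avg_shift; [|unfold G; solve_continuous|].
  2: { intros x. unfold G. now rewrite (x_periodic_d_1 psi Hps Hps_per), (x_periodic_d_2 omega Hom_per),
       (x_periodic_d_1 omega Hom Hom_per). }
  rewrite (avg_ext _ (fun x => t * (d_1 psi t x Y * d_1 omega t x Y) +
     g * (d_1 psi t x Y * d_2 omega t x Y))) by (intros; unfold G; ring).
  rewrite avg_plus, !avg_scal by solve_continuous. reflexivity.
Qed.

(* calH = 1 - V' - <f> is a function of (t, vinv t w); its derivatives follow from the chain rule,
   and the averaged transport equation closes the identity. *)
Lemma calH_evolution t w : 0 < t < T -> c0 < w < c0 + 1 ->
  dt2 (calH V1 Vd) t w = - (calH V1 Vd t w / t) - Vd t w * dw2 (calH V1 Vd) t w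
    - V1 t w * avgz (fun s z r => d_2 (Pne0 phi) s z r * d_1 f s z r) t w
    + V1 t w * avgz (fun s z r => d_1 phi s z r * d_2 f s z r) t w.
Proof.
  intros Ht Hw. destruct (vinv_spec t w ltac:(lra) ltac:(lra)) as [Hy _].
  pose proof (vy_ge t _ ltac:(lra) Hy).
  assert (Dt : dt2 (calH V1 Vd) t w =
    0 - (vty t (vinv t w) * 1 + vyy t (vinv t w) * (- vt t (vinv t w) / vy t (vinv t w)))
      - (avgz (d_t omega) t (vinv t w) * 1
         + avgz (d_2 omega) t (vinv t w) * (- vt t (vinv t w) / vy t (vinv t w)))).
  { unfold dt2. apply is_derive_unique. destruct (ball_in_open_interval 0 T t Ht) as [d [Hd Hn]].
    apply (is_derive_ext_ball (fun s => 1 - vy s (vinv s w) - mean_vort s (vinv s w)) _ _ _ d Hd).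
    - intros s Hs. specialize (Hn s Hs). symmetry. apply calH_eq; lra.
    - apply is_derive_Rminus; [apply is_derive_Rminus; [apply is_derive_Rconst|]|].
      + apply (is_derive_comp2 vy vty vyy (fun s => s) (fun s => vinv s w));
          [apply has_C1_partials_vy; lra|apply is_derive_Rid|apply is_derive_vinv_t; lra].
      + apply (is_derive_comp2 mean_vort (avgz (d_t omega)) (avgz (d_2 omega))
                 (fun s => s) (fun s => vinv s w));
          [apply smooth3_has_C1_partials_avgz, Hom|apply is_derive_Rid|apply is_derive_vinv_t; lra]. }
  assert (Dw : dw2 (calH V1 Vd) t w =
    0 - vyy t (vinv t w) * / vy t (vinv t w) - avgz (d_2 omega) t (vinv t w) * / vy t (vinv t w)).
  { unfold dw2. apply is_derive_unique.
    destruct (ball_in_open_interval c0 (c0 + 1) w Hw) as [d [Hd Hn]].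
    apply (is_derive_ext_ball (fun r => 1 - vy t (vinv t r) - mean_vort t (vinv t r)) _ _ _ d Hd).
    - intros r Hr. specialize (Hn r Hr). symmetry. apply calH_eq; lra.
    - apply is_derive_Rminus; [apply is_derive_Rminus; [apply is_derive_Rconst|]|];
        (apply is_derive_Rcomp; [|apply is_derive_vinv_2; lra]);
        [apply is_derive_vy_2|apply is_derive_mean_vort]. }
  rewrite Dt, Dw, avgz_d_2_Pne0_phi_d_1_f, avgz_d_1_phi_d_2_f, calH_eq, V1_eq, Vd_eq by lra.
  rewrite avgz_d_t_omega_eq by lra. rewrite <- vty_eq by lra.
  field. lra.
Qed.

End New_unknowns.

End Couette.

(* Otherwise unifying the lemmas below with the statement unfolds the averages into integrals. *)
Local Opaque avgz.

Theorem proposition2p1 :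
  exists eps : R, 0 < eps /\
  forall (theta0 T : R) (omega psi : R -> R -> R -> R),
    0 < theta0 -> theta0 <= / 8 -> 0 < T ->
    (* sufficiently smooth solution *)
    smooth3 omega -> smooth3 psi ->
    (* 2*PI-periodicity in x *)
    (forall t x y, omega t (x + 2 * PI) y = omega t x y) ->
    (forall t x y, psi t (x + 2 * PI) y = psi t x y) ->
    (* transport equation: d_t w + y d_x w + u . grad w = 0, u = (-d_y psi, d_x psi) *)
    (forall t x y, 0 <= t <= T -> 0 <= y <= 1 ->
       d_t omega t x y + y * d_1 omega t x y
       + ux psi t x y * d_1 omega t x y + d_1 psi t x y * d_2 omega t x y = 0) ->
    (* Delta psi = omega *)
    (forall t x y, 0 <= t <= T -> 0 <= y <= 1 ->
       d_1 (d_1 psi) t x y + d_2 (d_2 psi) t x y = omega t x y) ->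
    (* Dirichlet boundary conditions *)
    (forall t x, 0 <= t <= T -> psi t x 0 = 0 /\ psi t x 1 = 0) ->
    (* zero mean *)
    (forall t, 0 <= t <= T ->
       RInt (fun x => RInt (fun y => omega t x y) 0 1) 0 (2 * PI) = 0) ->
    (* support in T x [theta0, 1 - theta0] *)
    (forall t x y, 0 <= t <= T -> 0 <= y <= 1 -> (y < theta0 \/ 1 - theta0 < y) ->
       omega t x y = 0) ->
    (* smallness of <omega> in H^10 *)
    (forall t, 0 <= t <= T -> H10norm (fun y => avgz omega t y) < eps) ->
  exists c0 : R,
    (forall t y, 0 <= t <= T -> (0 <= y <= theta0 \/ 1 - theta0 <= y <= 1) ->
       avgz (ux psi) t y = c0) /\
    (* v(t,.) is a bijection [0,1] -> [c0, c0+1] *)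
    (forall t y, 0 < t <= T -> 0 <= y <= 1 ->
       c0 <= vmap psi t y <= c0 + 1) /\
    (forall t w, 0 < t <= T -> c0 <= w <= c0 + 1 ->
       exists y, (0 <= y <= 1 /\ vmap psi t y = w) /\
         forall y', 0 <= y' <= 1 -> vmap psi t y' = w -> y' = y) /\
    forall (f phi : R -> R -> R -> R) (V1 V2 Vd : R -> R -> R),
      (* definitions of the new unknowns, z = x - t v, v = vmap psi t y *)
      (forall t x y, 0 < t <= T -> 0 <= y <= 1 ->
         f t (x - t * vmap psi t y) (vmap psi t y) = omega t x y /\
         phi t (x - t * vmap psi t y) (vmap psi t y) = psi t x y /\
         V1 t (vmap psi t y) = Derive (fun s => vmap psi t s) y /\
         V2 t (vmap psi t y) = Derive (fun s => Derive (fun r => vmap psi t r) s) y /\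
         Vd t (vmap psi t y) = Derive (fun s => vmap psi s y) t) ->
      let H := fun t w => t * V1 t w * dw2 Vd t w in
      (* H = 1 - V' - <f> *)
      (forall t w, 0 < t <= T -> c0 < w < c0 + 1 ->
         H t w = 1 - V1 t w - avgz f t w) /\
      (* supports *)
      (forall t z w, 0 < t <= T -> c0 <= w <= c0 + 1 ->
         (w < c0 + theta0 \/ c0 + 1 - theta0 < w) ->
         f t z w = 0 /\ V1 t w - 1 = 0) /\
      (forall t w, 0 < t <= T -> c0 < w < c0 + 1 ->
         (w < c0 + theta0 \/ c0 + 1 - theta0 < w) -> H t w = 0) /\
      (* evolution equations *)
      (forall t z w, 0 < t < T -> c0 < w < c0 + 1 ->
         d_t f t z w =
           V1 t w * d_2 (Pne0 phi) t z w * d_1 f t z w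
           - (Vd t w + V1 t w * d_1 phi t z w) * d_2 f t z w) /\
      (forall t w, 0 < t < T -> c0 < w < c0 + 1 ->
         dt2 (fun s r => V1 s r - 1) t w =
           H t w / t - Vd t w * dw2 (fun s r => V1 s r - 1) t w) /\
      (forall t w, 0 < t < T -> c0 < w < c0 + 1 ->
         dt2 H t w =
           - (H t w / t) - Vd t w * dw2 H t w
           - V1 t w * avgz (fun s z r => d_2 (Pne0 phi) s z r * d_1 f s z r) t w
           + V1 t w * avgz (fun s z r => d_1 phi s z r * d_2 f s z r) t w) /\
      (* elliptic equation for phi: dz^2 phi + V'^2 (dv - t dz)^2 phi + V'' (dv - t dz) phi = f *)
      (forall t z w, 0 < t <= T -> c0 < w < c0 + 1 ->
         let L := fun s a b => d_2 phi s a b - t * d_1 phi s a b in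
         d_1 (d_1 phi) t z w
         + (V1 t w) ^ 2 * (d_2 L t z w - t * d_1 L t z w)
         + V2 t w * L t z w = f t z w) /\
      (* equations for Vdot and V'' *)
      (forall t w, 0 < t <= T -> c0 < w < c0 + 1 ->
         dw2 Vd t w = H t w / (t * V1 t w) /\ V2 t w = V1 t w * dw2 V1 t w) /\
      (forall t, 0 < t <= T -> Vd t c0 = 0 /\ Vd t (1 + c0) = 0).
Proof.
  exists (/ 2). split; [lra|].
  intros theta0 T omega psi Htheta Htheta8 _ Hom Hps Hom_per Hps_per Htransport Hlaplace Hwall
    Hmean Hsupp Hsmall.
  exists (c0 psi). split; [|split; [|split]].
  - intros. eapply (mean_ux_near_walls theta0 T omega psi); eassumption.
  - intros. eapply (vmap_range theta0 T omega psi); eassumption.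
  - intros t w Ht Hw. exists (vinv psi t w).
    split; [eapply (vinv_spec theta0 T omega psi); eassumption|].
    intros. eapply (vinv_unique theta0 T omega psi); eassumption.
  - intros f phi V1 V2 Vd Hdef H.
    split; [|split; [|split; [|split; [|split; [|split; [|split; [|split]]]]]]]; intros.
    + eapply (calH_eq_1_minus_V1_avgz_f theta0 T omega psi); eassumption.
    + eapply (f_V1_near_walls theta0 T omega psi); eassumption.
    + eapply (calH_near_walls theta0 T omega psi); eassumption.
    + eapply (f_evolution theta0 T omega psi); eassumption.
    + eapply (V1_evolution theta0 T omega psi); eassumption.
    + eapply (calH_evolution theta0 T omega psi); eassumption.
    + eapply (elliptic_eq theta0 T omega psi); eassumption.
    + split; [eapply (d_2_Vd_eq theta0 T omega psi)|eapply (V2_eq_V1_d_2_V1 theta0 T omega psi)];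
        eassumption.
    + eapply (Vd_walls theta0 T omega psi); eassumption.
Qed.
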